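(* Let $F=L-N:X\to Y$ be of class $C^1$ and satisfy hypothesis (H). Let $u_0=u(z_0,t_0)\in X$, with $z_0\in H_Y$, $t_0\in\mathbb{R}$. Then $u_0$ is a critical point of $F$ (i.e. $DF(u_0):X\to Y$ is not invertible) if and only if $t_0$ is a critical point of the function $t\mapsto h(u(z_0,t))$, equivalently of $t\mapsto h^a(z_0,t)$.
   Context: Let $X,Y$ be real Hilbert spaces, $X$ densely included in $Y$, and let $L:X\subset Y\to Y$ be a self-adjoint operator, $X$ carrying the graph norm. Let $\lambda_p$ be a simple isolated eigenvalue of $L$ with eigenvector $\phi_p\in X$, $\|\phi_p\|_Y=1$. Let $V_X=V_Y=\langle\phi_p\rangle$ be its real span, $H_Y=\{y\in Y:\langle y,\phi_p\rangle_Y=0\}$, $H_X=X\cap H_Y$, and $P:Y\to H_Y$ the orthogonal projection. Let $N:Y\to Y$, $F=L-N:X\to Y$, and for $t\in\mathbb{R}$ let $PN_t:H_Y\to H_Y$, $PN_t(w)=PN(w+t\phi_p)$, and $PF_t:H_X\to H_Y$, $PF_t(w)=PF(w+t\phi_p)$. Hypothesis (H): there is $n\ge0$ such that every $PN_t$ is Lipschitz with constant $n$ independent of $t$, and $[-n,n]\cap\sigma(L)=\{\lambda_p\}$. Under (H) each $PF_t$ is a homeomorphism (a $C^1$ diffeomorphism if $F$ is $C^1$); for $z\in H_Y$, $t\in\mathbb{R}$ let $w(z,t)=(PF_t)^{-1}(z)$ and $u(z,t)=w(z,t)+t\phi_p$, so that $\{u(z,t):t\in\mathbb{R}\}=F^{-1}(z+V_Y)$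 is the fiber associated to $z$. The height function is $h:X\to\mathbb{R}$, $h(u)=\langle F(u),\phi_p\rangle_Y$, and the adapted height function is $h^a(z,t)=h(u(z,t))$, so that $F(u(z,t))=z+h^a(z,t)\phi_p$. *)

From Stdlib Require Import Reals Lra ClassicalEpsilon.
Open Scope R_scope.
Set Implicit Arguments.

Record RHilbert := {
  hcar :> Type;
  hzero : hcar;
  hadd : hcar -> hcar -> hcar;
  hopp : hcar -> hcar;
  hscal : R -> hcar -> hcar;
  hinner : hcar -> hcar -> R;
  hadd_assoc : forall x y z, hadd x (hadd y z) = hadd (hadd x y) z;
  hadd_comm : forall x y, hadd x y = hadd y x;
  hadd_zero : forall x, hadd x hzero = x;
  hadd_opp : forall x, hadd x (hopp x) = hzero;
  hscal_one : forall x, hscal 1 x = x;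
  hscal_assoc : forall a b x, hscal a (hscal b x) = hscal (a * b) x;
  hscal_distr_l : forall a x y, hscal a (hadd x y) = hadd (hscal a x) (hscal a y);
  hscal_distr_r : forall a b x, hscal (a + b) x = hadd (hscal a x) (hscal b x);
  hinner_sym : forall x y, hinner x y = hinner y x;
  hinner_add : forall x y z, hinner (hadd x y) z = hinner x z + hinner y z;
  hinner_scal : forall a x y, hinner (hscal a x) y = a * hinner x y;
  hinner_pos : forall x, 0 <= hinner x x;
  hinner_def : forall x, hinner x x = 0 -> x = hzero;
  hcomplete : forall u : nat -> hcar,
    (forall eps, eps > 0 -> exists N : nat, forall m k, (N <= m)%nat -> (N <= k)%nat ->
        sqrt (hinner (hadd (u m) (hopp (u k))) (hadd (u m) (hopp (u k)))) < eps) ->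
    exists l, forall eps, eps > 0 -> exists N : nat, forall m, (N <= m)%nat ->
        sqrt (hinner (hadd (u m) (hopp l)) (hadd (u m) (hopp l))) < eps
}.

Arguments hzero {_}.
Arguments hadd {_}.
Arguments hopp {_}.
Arguments hscal {_}.
Arguments hinner {_}.

Section Ops.
Context {Y : RHilbert}.

Definition hsub (x y : Y) : Y := hadd x (hopp y).
Definition hnorm (x : Y) : R := sqrt (hinner x x).

(** The domain X of L is modelled as a predicate D on Y (X ⊂ Y),
    and L : Y -> Y is only meaningful on D. *)
Definition subspace (D : Y -> Prop) : Prop :=
  D hzero /\ (forall x y, D x -> D y -> D (hadd x y)) /\
  (forall a x, D x -> D (hscal a x)).

Definition dense (D : Y -> Prop) : Prop :=
  forall y eps, eps > 0 -> exists x, D x /\ hnorm (hsub x y) < eps.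

Definition linear_on (D : Y -> Prop) (f : Y -> Y) : Prop :=
  (forall x y, D x -> D y -> f (hadd x y) = hadd (f x) (f y)) /\
  (forall a x, D x -> f (hscal a x) = hscal a (f x)).

Definition self_adjoint (D : Y -> Prop) (L : Y -> Y) : Prop :=
  subspace D /\ dense D /\ linear_on D L /\
  (forall x y, D x -> D y -> hinner (L x) y = hinner x (L y)) /\
  (forall y z, (forall x, D x -> hinner (L x) y = hinner x z) -> D y /\ L y = z).

Definition gnorm (L : Y -> Y) (x : Y) : R :=
  sqrt (hinner x x + hinner (L x) (L x)).

Definition in_resolvent (D : Y -> Prop) (L : Y -> Y) (mu : R) : Prop :=
  exists Rinv : Y -> Y,
    linear_on (fun _ => True) Rinv /\
    (exists C, forall y, hnorm (Rinv y) <= C * hnorm y) /\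
    (forall y, D (Rinv y) /\ hsub (L (Rinv y)) (hscal mu (Rinv y)) = y) /\
    (forall x, D x -> Rinv (hsub (L x) (hscal mu x)) = x).

Definition in_spectrum (D : Y -> Prop) (L : Y -> Y) (mu : R) : Prop :=
  ~ in_resolvent D L mu.

Definition simple_isolated_eigenvalue (D : Y -> Prop) (L : Y -> Y) (lam : R) (phi : Y) : Prop :=
  D phi /\ hnorm phi = 1 /\ L phi = hscal lam phi /\
  (forall x, D x -> L x = hscal lam x -> exists c, x = hscal c phi) /\
  (exists eps, eps > 0 /\ forall mu, mu <> lam -> Rabs (mu - lam) < eps -> in_resolvent D L mu).

Definition HY (phi y : Y) : Prop := hinner y phi = 0.
Definition Pproj (phi y : Y) : Y := hsub y (hscal (hinner y phi) phi).

Definition shift (phi : Y) (t : R) (w : Y) : Y := hadd w (hscal t phi).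

Definition hypH (D : Y -> Prop) (L N : Y -> Y) (phi : Y) (lam n : R) : Prop :=
  0 <= n /\
  (forall t w1 w2, HY phi w1 -> HY phi w2 ->
     hnorm (hsub (Pproj phi (N (shift phi t w1))) (Pproj phi (N (shift phi t w2))))
       <= n * hnorm (hsub w1 w2)) /\
  (-n <= lam <= n /\ in_spectrum D L lam) /\
  (forall mu, -n <= mu <= n -> in_spectrum D L mu -> mu = lam).

Definition Fmap (L N : Y -> Y) (u : Y) : Y := hsub (L u) (N u).

Definition is_C1 (D : Y -> Prop) (L : Y -> Y) (F : Y -> Y) (DF : Y -> Y -> Y) : Prop :=
  (forall u, D u -> linear_on D (DF u) /\
     exists C, forall h, D h -> hnorm (DF u h) <= C * gnorm L h) /\
  (forall u, D u -> forall eps, eps > 0 -> exists delta, delta > 0 /\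
     forall h, D h -> gnorm L h < delta ->
       hnorm (hsub (hsub (F (hadd u h)) (F u)) (DF u h)) <= eps * gnorm L h) /\
  (forall u, D u -> forall eps, eps > 0 -> exists delta, delta > 0 /\
     forall u', D u' -> gnorm L (hsub u' u) < delta ->
       forall h, D h -> hnorm (hsub (DF u' h) (DF u h)) <= eps * gnorm L h).

Definition invertible_op (D : Y -> Prop) (L : Y -> Y) (A : Y -> Y) : Prop :=
  exists G : Y -> Y,
    (forall y, D (G y) /\ A (G y) = y) /\
    (forall x, D x -> G (A x) = x) /\
    (exists C, forall y, gnorm L (G y) <= C * hnorm y).

(** w(z,t) = (PF_t)^{-1}(z) and u(z,t) = w(z,t) + t phi. *)
Definition fiber_w (D : Y -> Prop) (L N : Y -> Y) (phi z : Y) (t : R) : Y :=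
  epsilon (inhabits hzero)
    (fun w => D w /\ HY phi w /\ Pproj phi (Fmap L N (shift phi t w)) = z).

Definition fiber_u (D : Y -> Prop) (L N : Y -> Y) (phi z : Y) (t : R) : Y :=
  shift phi t (fiber_w D L N phi z t).

Definition height (L N : Y -> Y) (phi u : Y) : R := hinner (Fmap L N u) phi.

Definition adapted_height (D : Y -> Prop) (L N : Y -> Y) (phi z : Y) (t : R) : R :=
  height L N phi (fiber_u D L N phi z t).

End Ops.

(* By (H), [L] restricted to [H_X] is invertible onto [H_Y] with inverse of norm [< 1/n], so each
   [PF_t] is a Lipschitz perturbation of an isomorphism: the fiber point [w(z,t)] is the fixed
   point of a contraction and depends Lipschitz-continuously on [t]; and since the linearisation
   of [PN_t] inherits the Lipschitz constant [n], [P DF(u0) : H_X -> H_Y] is an isomorphism too.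
   Hence there is [v0 = w' + phi] with [P DF(u0) v0 = 0], i.e. [DF(u0) v0 = c phi], and [DF(u0)]
   is invertible iff [c <> 0].  As [v0] is the tangent of the fiber, [c] is the derivative of
   [t |-> h(u(z0,t))] at [t0].

   The invertibility of [L] on [H_X] is extracted from (H) without a spectral theorem: the norm
   of a bounded symmetric operator is attained by an approximate eigenvalue, which is applied to
   resolvents of [L]; and a power iteration shows that the isolated eigenvalue [lam] cannot be
   approximated by vectors orthogonal to [phi]. *)

From Stdlib Require Import Reals Lra Lia ClassicalEpsilon Classical.
Open Scope R_scope.

(** * Real Hilbert spaces *)

Section InnerProduct.
Context {Y : RHilbert}.
Implicit Types x y z : Y.

Lemma hscal0_zero : hscal 0 (@hzero Y) = hzero.
Proof.
  assert (E := hscal_distr_r Y 0 0 hzero). rewrite Rplus_0_r in E.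
  assert (E' := f_equal (fun v => hadd v (hopp (hscal 0 (@hzero Y)))) E). simpl in E'.
  now rewrite hadd_opp, <- hadd_assoc, hadd_opp, hadd_zero in E'.
Qed.

Lemma hinner_zero_l z : hinner (@hzero Y) z = 0.
Proof.
  assert (E := hinner_scal Y 0 hzero z). rewrite hscal0_zero in E. lra.
Qed.

Lemma hinner_opp_l x z : hinner (hopp x) z = - hinner x z.
Proof.
  assert (E := hinner_add Y x (hopp x) z).
  rewrite hadd_opp, hinner_zero_l in E. lra.
Qed.

Lemma hinner_sub_l x y z : hinner (hsub x y) z = hinner x z - hinner y z.
Proof. unfold hsub. rewrite hinner_add, hinner_opp_l. ring. Qed.

Lemma hinner_add_r x y z : hinner z (hadd x y) = hinner z x + hinner z y.
Proof. rewrite !(hinner_sym Y z). apply hinner_add. Qed.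
Lemma hinner_scal_r a x z : hinner z (hscal a x) = a * hinner z x.
Proof. rewrite !(hinner_sym Y z). apply hinner_scal. Qed.
Lemma hinner_opp_r x z : hinner z (hopp x) = - hinner z x.
Proof. rewrite !(hinner_sym Y z). apply hinner_opp_l. Qed.
Lemma hinner_sub_r x y z : hinner z (hsub x y) = hinner z x - hinner z y.
Proof. rewrite !(hinner_sym Y z). apply hinner_sub_l. Qed.
Lemma hinner_zero_r z : hinner z (@hzero Y) = 0.
Proof. rewrite hinner_sym. apply hinner_zero_l. Qed.

Lemma hinner_ext x y : (forall z, hinner x z = hinner y z) -> x = y.
Proof.
  intro H. assert (E : hinner (hsub x y) (hsub x y) = 0) by (rewrite hinner_sub_l, !H; ring).
  apply hinner_def in E.
  assert (E' := f_equal (fun v => hadd v y) E). simpl in E'. unfold hsub in E'.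
  rewrite <- hadd_assoc, (hadd_comm Y (hopp y)), hadd_opp, hadd_zero, hadd_comm, hadd_zero in E'.
  now symmetry.
Qed.

End InnerProduct.

Global Hint Rewrite @hinner_add @hinner_scal @hinner_opp_l @hinner_sub_l @hinner_zero_l : hinner_l.
Global Hint Rewrite @hinner_add_r @hinner_scal_r @hinner_opp_r @hinner_sub_r @hinner_zero_r
  : hinner_r.

(* A vector identity is checked by pairing both sides with an arbitrary [z]: this turns it into
   a ring identity between real numbers. *)
Ltac hvec_eq := apply hinner_ext; let z := fresh "z" in intro z; autorewrite with hinner_l; try ring.

Section VectorIdentities.
Context {Y : RHilbert}.
Implicit Types x y z : Y.

Lemma hscal0 x : hscal 0 x = @hzero Y. Proof. hvec_eq. Qed.
Lemma hopp_scal x : hopp x = hscal (-1) x. Proof. hvec_eq. Qed.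
Lemma hsub_diag x : hsub x x = @hzero Y. Proof. hvec_eq. Qed.

Lemma hsub_eq0 x y : hsub x y = hzero -> x = y.
Proof.
  intro H. apply hinner_ext. intro z. assert (E := f_equal (fun v => hinner v z) H). simpl in E.
  rewrite hinner_sub_l, hinner_zero_l in E. lra.
Qed.

End VectorIdentities.

Lemma discriminant_nonpos a b c :
  0 <= c -> (forall s, 0 <= a + 2 * b * s + c * s * s) -> b * b <= a * c.
Proof.
  intros Hc H. destruct (Req_dec c 0) as [->|Hc0].
  - destruct (Req_dec b 0) as [->|Hb]; [specialize (H 0); nra|].
    specialize (H (- (a + 1) / (2 * b))).
    replace (a + 2 * b * (- (a + 1) / (2 * b)) + 0 * (- (a + 1) / (2 * b)) * (- (a + 1) / (2 * b)))
      with (-1) in H by (field; auto). lra.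
  - specialize (H (- b / c)).
    replace (a + 2 * b * (- b / c) + c * (- b / c) * (- b / c)) with ((a * c - b * b) / c) in H
      by (field; auto).
    assert (0 <= (a * c - b * b) / c * c) by (apply Rmult_le_pos; lra).
    replace ((a * c - b * b) / c * c) with (a * c - b * b) in * by (field; auto). lra.
Qed.

Lemma Rabs_le_between a b : Rabs a <= b -> - b <= a <= b.
Proof. unfold Rabs. destruct (Rcase_abs a); lra. Qed.

Lemma Rabs_div_one_sub_le r : 0 < Rabs r < 1/2 -> 0 < Rabs (r / (1 - r)) <= 1.
Proof.
  intro Hr. assert (1/2 < 1 - r) by (pose proof (Rle_abs r); lra).
  unfold Rdiv. rewrite Rabs_mult, Rabs_inv, (Rabs_pos_eq (1 - r)) by lra.
  split; [apply Rmult_lt_0_compat; [lra | apply Rinv_0_lt_compat; lra]|].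
  apply (Rmult_le_reg_r (1 - r)); [lra|]. rewrite Rmult_assoc, Rinv_l by lra. lra.
Qed.

Lemma derivable_pt_lim_of_remainder (f : R -> R) x l :
  (forall eps, 0 < eps -> exists delta, 0 < delta /\ forall h, h <> 0 -> Rabs h < delta ->
     Rabs (f (x + h) - f x - h * l) <= eps * Rabs h) ->
  derivable_pt_lim f x l.
Proof.
  intros H eps Heps. destruct (H (eps / 2)) as [delta [Hd Hf]]; [lra|].
  exists (mkposreal delta Hd). intros h Hh Hhd. simpl in Hhd.
  pose proof (Rabs_pos_lt h Hh). specialize (Hf h Hh Hhd).
  replace ((f (x + h) - f x) / h - l) with ((f (x + h) - f x - h * l) / h) by (field; auto).
  unfold Rdiv. rewrite Rabs_mult, Rabs_inv.
  apply (Rmult_lt_reg_r (Rabs h)); auto. rewrite Rmult_assoc, Rinv_l, Rmult_1_r by lra. nra.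
Qed.

Section Norms.
Context {Y : RHilbert}.
Implicit Types x y z : Y.

Lemma hnorm_ge0 x : 0 <= hnorm x. Proof. apply sqrt_pos. Qed.
Lemma hnorm_sq x : hnorm x * hnorm x = hinner x x.
Proof. apply sqrt_sqrt, hinner_pos. Qed.

Lemma cauchy_schwarz_sq x y : hinner x y * hinner x y <= hinner x x * hinner y y.
Proof.
  apply discriminant_nonpos; [apply hinner_pos|]. intro s.
  assert (H := hinner_pos Y (hadd x (hscal s y))).
  autorewrite with hinner_l hinner_r in H. rewrite (hinner_sym Y y x) in H. nra.
Qed.

Lemma cauchy_schwarz x y : Rabs (hinner x y) <= hnorm x * hnorm y.
Proof.
  assert (Hxy : 0 <= hnorm x * hnorm y) by (apply Rmult_le_pos; apply hnorm_ge0).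
  pose proof (cauchy_schwarz_sq x y) as Hsq. rewrite <- !hnorm_sq in Hsq.
  apply Rabs_le. split; nra.
Qed.

Lemma hinner_le_norm x y : hinner x y <= hnorm x * hnorm y.
Proof. eapply Rle_trans; [apply Rle_abs | apply cauchy_schwarz]. Qed.

Lemma hnorm_scal a x : hnorm (hscal a x) = Rabs a * hnorm x.
Proof.
  unfold hnorm. rewrite hinner_scal, hinner_scal_r, <- Rmult_assoc.
  rewrite sqrt_mult_alt by apply Rle_0_sqr. f_equal. apply sqrt_Rsqr_abs.
Qed.

Lemma hnorm_add x y : hnorm (hadd x y) <= hnorm x + hnorm y.
Proof.
  pose proof (hnorm_ge0 x); pose proof (hnorm_ge0 y); pose proof (hnorm_ge0 (hadd x y)).
  assert (hnorm (hadd x y) * hnorm (hadd x y) <= (hnorm x + hnorm y) * (hnorm x + hnorm y)).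
  { rewrite hnorm_sq. autorewrite with hinner_l hinner_r.
    pose proof (hinner_le_norm x y). rewrite (hinner_sym Y y x), <- !hnorm_sq. nra. }
  nra.
Qed.

Lemma hnorm_opp x : hnorm (hopp x) = hnorm x.
Proof. rewrite hopp_scal, hnorm_scal, Rabs_left by lra. ring. Qed.

Lemma hnorm_sub x y : hnorm (hsub x y) <= hnorm x + hnorm y.
Proof. rewrite <- (hnorm_opp y). apply hnorm_add. Qed.

Lemma hnorm_sub_sym x y : hnorm (hsub x y) = hnorm (hsub y x).
Proof. replace (hsub x y) with (hopp (hsub y x)) by hvec_eq. apply hnorm_opp. Qed.

Lemma hnorm_sub_triangle x y z : hnorm (hsub x z) <= hnorm (hsub x y) + hnorm (hsub y z).
Proof. replace (hsub x z) with (hadd (hsub x y) (hsub y z)) by hvec_eq. apply hnorm_add. Qed.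

Lemma hnorm_sub_ge x y : hnorm x - hnorm y <= hnorm (hsub x y).
Proof.
  pose proof (hnorm_add (hsub x y) y).
  replace (hadd (hsub x y) y) with x in H by hvec_eq. lra.
Qed.

Lemma hnorm_zero : hnorm (@hzero Y) = 0.
Proof. unfold hnorm. rewrite hinner_zero_l. apply sqrt_0. Qed.

Lemma hnorm_eq0 x : hnorm x = 0 -> x = hzero.
Proof. intro H. apply hinner_def. rewrite <- hnorm_sq, H. ring. Qed.

Lemma hnorm_sub_eq0 x y : hnorm (hsub x y) = 0 -> x = y.
Proof. intro. now apply hsub_eq0, hnorm_eq0. Qed.

Lemma hnorm_normalize x : 0 < hnorm x -> hnorm (hscal (/ hnorm x) x) = 1.
Proof.
  intro. rewrite hnorm_scal, Rabs_pos_eq by (apply Rlt_le, Rinv_0_lt_compat; lra). field; lra.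
Qed.

End Norms.

(** * The contraction principle *)

Section Sequences.
Context {Y : RHilbert}.
Implicit Types x y z l : Y.

Definition hconverges (u : nat -> Y) l : Prop :=
  forall eps, eps > 0 -> exists N, forall m, (N <= m)%nat -> hnorm (hsub (u m) l) < eps.
Definition hcauchy (u : nat -> Y) : Prop :=
  forall eps, eps > 0 -> exists N, forall m k, (N <= m)%nat -> (N <= k)%nat ->
    hnorm (hsub (u m) (u k)) < eps.
Definition closed_set (S : Y -> Prop) : Prop :=
  forall u l, (forall m, S (u m)) -> hconverges u l -> S l.

Lemma hconverges_unique u l1 l2 : hconverges u l1 -> hconverges u l2 -> l1 = l2.
Proof.
  intros H1 H2. apply hnorm_sub_eq0. apply Rle_antisym; [|apply hnorm_ge0].
  apply Rnot_lt_le. intro Hp. set (e := hnorm (hsub l1 l2)) in *.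
  destruct (H1 (e / 2)) as [N1 HN1]; [lra|]. destruct (H2 (e / 2)) as [N2 HN2]; [lra|].
  specialize (HN1 (max N1 N2) ltac:(lia)). specialize (HN2 (max N1 N2) ltac:(lia)).
  pose proof (hnorm_sub_triangle l1 (u (max N1 N2)) l2).
  rewrite (hnorm_sub_sym l1 (u _)) in H. unfold e in *. lra.
Qed.

Lemma hconverges_lipschitz (T : Y -> Y) C u l :
  (forall a b, hnorm (hsub (T a) (T b)) <= C * hnorm (hsub a b)) ->
  hconverges u l -> hconverges (fun m => T (u m)) (T l).
Proof.
  intros HT H e He. set (C' := Rabs C + 1). assert (HC' : 0 < C') by (pose proof (Rabs_pos C); unfold C'; lra).
  destruct (H (e / C')) as [N HN]; [now apply Rdiv_lt_0_compat|].
  exists N. intros m Hm. specialize (HN m Hm). pose proof (hnorm_ge0 (hsub (u m) l)).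
  eapply Rle_lt_trans; [apply HT|]. apply Rle_lt_trans with (C' * hnorm (hsub (u m) l)).
  - apply Rmult_le_compat_r; auto. pose proof (Rle_abs C). unfold C'. lra.
  - replace e with (C' * (e / C')) by (field; lra). now apply Rmult_lt_compat_l.
Qed.

Lemma hconverges_shift u l k : hconverges u l -> hconverges (fun m => u (m + k)%nat) l.
Proof. intros H e He. destruct (H e He) as [N HN]. exists N. intros. apply HN. lia. Qed.

Lemma hconverges_ext u v l : (forall m, u m = v m) -> hconverges u l -> hconverges v l.
Proof. intros E H e He. destruct (H e He) as [N HN]. exists N. intros. rewrite <- E. auto. Qed.

Lemma closed_hinner_eq z r : closed_set (fun x => hinner x z = r).
Proof.
  intros u l Hu Hl. destruct (Req_dec (hinner l z) r) as [|Hne]; auto. exfalso.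
  set (e := Rabs (hinner l z - r) / (hnorm z + 1)).
  assert (He : e > 0).
  { apply Rdiv_lt_0_compat; [apply Rabs_pos_lt; lra | pose proof (hnorm_ge0 z); lra]. }
  destruct (Hl e He) as [N HN]. specialize (HN N (le_n _)).
  pose proof (cauchy_schwarz (hsub (u N) l) z) as Hcs.
  rewrite hinner_sub_l, Hu, Rabs_minus_sym in Hcs.
  pose proof (hnorm_ge0 z). pose proof (hnorm_ge0 (hsub (u N) l)).
  assert (hnorm (hsub (u N) l) * hnorm z <= e * hnorm z) by (apply Rmult_le_compat_r; lra).
  assert (e * (hnorm z + 1) = Rabs (hinner l z - r)) by (unfold e; field; lra).
  lra.
Qed.

Lemma geometric_cauchy (u : nat -> Y) q c : 0 <= q < 1 ->
  (forall m, hnorm (hsub (u (S m)) (u m)) <= c * q ^ m) -> hcauchy u.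
Proof.
  intros Hq H.
  assert (Hc : 0 <= c) by (specialize (H 0%nat); pose proof (hnorm_ge0 (hsub (u 1%nat) (u 0%nat))); simpl in H; lra).
  assert (Hdist : forall a k, hnorm (hsub (u (a + k)%nat) (u a)) <= c * q ^ a * (1 - q ^ k) / (1 - q)).
  { intros a k. induction k.
    - rewrite Nat.add_0_r, hsub_diag, hnorm_zero. simpl. apply Req_le. field. lra.
    - replace (a + S k)%nat with (S (a + k)) by lia.
      eapply Rle_trans; [apply (hnorm_sub_triangle _ (u (a + k)%nat))|].
      eapply Rle_trans; [apply Rplus_le_compat; [apply H | apply IHk]|].
      rewrite pow_add. simpl. apply Req_le. field. lra. }
  intros e He. destruct (pow_lt_1_zero q ltac:(rewrite Rabs_pos_eq; lra) (e * (1 - q) / (c + 1)))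
    as [N HN]; [apply Rdiv_lt_0_compat; [apply Rmult_lt_0_compat|]; lra|].
  assert (G : forall a b, (N <= a)%nat -> (a <= b)%nat -> hnorm (hsub (u b) (u a)) < e).
  { intros a b Ha Hb. replace b with (a + (b - a))%nat by lia.
    eapply Rle_lt_trans; [apply Hdist|].
    specialize (HN a Ha). rewrite Rabs_pos_eq in HN by (apply pow_le; lra).
    assert (0 <= q ^ (b - a) <= 1) by (split; [apply pow_le | rewrite <- (pow1 (b - a)); apply pow_incr]; lra).
    assert (0 <= q ^ a) by (apply pow_le; lra).
    apply Rle_lt_trans with ((c + 1) * q ^ a / (1 - q)).
    { unfold Rdiv. apply Rmult_le_compat_r; [apply Rlt_le, Rinv_0_lt_compat; lra|].
      assert (0 <= c * q ^ a * q ^ (b - a)) by (repeat apply Rmult_le_pos; lra). nra. }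
    replace e with ((c + 1) * (e * (1 - q) / (c + 1)) / (1 - q)) by (field; lra).
    unfold Rdiv. apply Rmult_lt_compat_r; [apply Rinv_0_lt_compat; lra | apply Rmult_lt_compat_l; lra]. }
  exists N. intros m k Hm Hk. destruct (Nat.le_ge_cases m k).
  - rewrite hnorm_sub_sym. auto.
  - auto.
Qed.

Lemma contraction_fixpoint (A : Y -> Prop) (Phi : Y -> Y) q x0 :
  closed_set A -> A x0 -> (forall x, A x -> A (Phi x)) -> 0 <= q < 1 ->
  (forall x y, A x -> A y -> hnorm (hsub (Phi x) (Phi y)) <= q * hnorm (hsub x y)) ->
  exists x, A x /\ Phi x = x.
Proof.
  intros HA H0 HPhi Hq Hc.
  set (u := fun m => Nat.iter m Phi x0).
  assert (Au : forall m, A (u m)) by (induction m; simpl; auto).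
  set (c := hnorm (hsub (u 1%nat) (u 0%nat))).
  assert (Hstep : forall m, hnorm (hsub (u (S m)) (u m)) <= c * q ^ m).
  { induction m; [rewrite pow_O, Rmult_1_r; apply Rle_refl|].
    change (hnorm (hsub (Phi (u (S m))) (Phi (u m))) <= c * (q * q ^ m)).
    eapply Rle_trans; [apply Hc; auto|]. nra. }
  destruct (hcomplete Y u (geometric_cauchy u q c Hq Hstep)) as [l Hl]. change (hconverges u l) in Hl.
  assert (Al : A l) by exact (HA u l Au Hl).
  exists l. split; auto.
  apply (hconverges_unique (fun m => Phi (u m))).
  - intros e He. destruct (Hl (e / (q + 1))) as [N HN]; [apply Rdiv_lt_0_compat; lra|].
    exists N. intros m Hm. eapply Rle_lt_trans; [apply Hc; auto|].
    specialize (HN m Hm). pose proof (hnorm_ge0 (hsub (u m) l)).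
    apply Rle_lt_trans with ((q + 1) * hnorm (hsub (u m) l)); [nra|].
    replace e with ((q + 1) * (e / (q + 1))) at 1 by (field; lra). apply Rmult_lt_compat_l; lra.
  - apply (hconverges_ext (fun m => u (m + 1)%nat)); [|now apply hconverges_shift].
    intro m. now replace (m + 1)%nat with (S m) by lia.
Qed.

End Sequences.

(** * Bounded symmetric operators *)

Section BoundedSymmetric.
Context {Y : RHilbert}.
Implicit Types x y z : Y.
Implicit Types T A B : Y -> Y.

Definition linear_map T : Prop :=
  (forall x y, T (hadd x y) = hadd (T x) (T y)) /\ (forall a x, T (hscal a x) = hscal a (T x)).
Definition symmetric T : Prop := forall x y, hinner (T x) y = hinner x (T y).
Definition positive T : Prop := forall x, 0 <= hinner (T x) x.
Definition bounded_by T (C : R) : Prop := forall x, hnorm (T x) <= C * hnorm x.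
Definition bounded_below A (c : R) : Prop := 0 < c /\ forall x, c * hnorm x <= hnorm (A x).
Definition sub_scal T (r : R) : Y -> Y := fun x => hsub (T x) (hscal r x).
Definition approx_eigenvalue T (r : R) : Prop :=
  forall eps, eps > 0 -> exists x, hnorm x = 1 /\ hnorm (sub_scal T r x) < eps.

Lemma linear_zero T : linear_map T -> T hzero = hzero.
Proof. intros [_ H]. now rewrite <- (hscal0 hzero), H, !hscal0. Qed.
Lemma linear_sub T x y : linear_map T -> T (hsub x y) = hsub (T x) (T y).
Proof. intros [H1 H2]. unfold hsub. now rewrite H1, !hopp_scal, H2. Qed.
Lemma linear_comp A B : linear_map A -> linear_map B -> linear_map (fun x => A (B x)).
Proof. intros [A1 A2] [B1 B2]. split; intros; now rewrite ?B1, ?B2, ?A1, ?A2. Qed.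
Lemma bounded_by_nonneg T C (e0 : Y) : bounded_by T C -> hnorm e0 = 1 -> 0 <= C.
Proof. intros H He. specialize (H e0). rewrite He in H. pose proof (hnorm_ge0 (T e0)). lra. Qed.

Lemma bounded_by_comp A B CA CB :
  bounded_by A CA -> bounded_by B CB -> 0 <= CA -> bounded_by (fun x => A (B x)) (CA * CB).
Proof.
  intros HA HB H x. eapply Rle_trans; [apply HA|]. rewrite Rmult_assoc.
  now apply Rmult_le_compat_l.
Qed.

Lemma bounded_below_comp A B c1 c2 :
  bounded_below A c1 -> bounded_below B c2 -> bounded_below (fun x => A (B x)) (c1 * c2).
Proof.
  intros [H1 A1] [H2 B1]. split; [nra|]. intro x. specialize (A1 (B x)). specialize (B1 x).
  pose proof (hnorm_ge0 x). nra.
Qed.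

Lemma bounded_below_not_approx_eigenvalue T r c :
  bounded_below (sub_scal T r) c -> ~ approx_eigenvalue T r.
Proof.
  intros [Hc H] Ha. destruct (Ha c Hc) as [x [Hx1 Hx2]]. specialize (H x). rewrite Hx1 in H. lra.
Qed.

(* Polarization, applied to [x] and a multiple of [T x]. *)
Lemma bounded_of_form_bound T m : linear_map T -> symmetric T -> 0 <= m ->
  (forall x, Rabs (hinner (T x) x) <= m * hinner x x) -> bounded_by T m.
Proof.
  intros HL HS Hm H x.
  assert (P : forall u v, 4 * hinner (T u) v <= 2 * m * (hinner u u + hinner v v)).
  { intros u v. pose proof (Rabs_le_between _ _ (H (hadd u v))) as H1.
    pose proof (Rabs_le_between _ _ (H (hsub u v))) as H2.
    rewrite (linear_sub T u v HL) in H2. destruct HL as [La _]. rewrite La in H1.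
    autorewrite with hinner_l hinner_r in H1, H2.
    rewrite (HS v u), (hinner_sym Y v u), (hinner_sym Y v (T u)) in H1, H2. lra. }
  pose proof (hnorm_ge0 (T x)) as G0. pose proof (hnorm_ge0 x) as G1.
  destruct (Req_dec (hnorm (T x)) 0) as [E|E]; [rewrite E; nra|].
  destruct (Req_dec (hnorm x) 0) as [E2|E2].
  { apply hnorm_eq0 in E2. subst. now rewrite linear_zero, hnorm_zero in E. }
  set (s := hnorm x / hnorm (T x)).
  specialize (P x (hscal s (T x))). rewrite hinner_scal_r, hinner_scal, hinner_scal_r in P.
  rewrite <- !hnorm_sq in P. unfold s in P.
  replace (hnorm x / hnorm (T x) * (hnorm (T x) * hnorm (T x))) with (hnorm x * hnorm (T x)) in P
    by (field; lra).
  replace (hnorm x / hnorm (T x) * (hnorm x * hnorm (T x))) with (hnorm x * hnorm x) in P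
    by (field; lra).
  assert (0 < hnorm x) by lra.
  apply Rmult_le_reg_l with (4 * hnorm x); nra.
Qed.

Lemma positive_cauchy_schwarz T x y : linear_map T -> symmetric T -> positive T ->
  hinner (T x) y * hinner (T x) y <= hinner (T x) x * hinner (T y) y.
Proof.
  intros [La Ls] HS Hp. apply discriminant_nonpos; [apply Hp|]. intro s.
  pose proof (Hp (hadd x (hscal s y))) as H. rewrite La, Ls in H.
  autorewrite with hinner_l hinner_r in H. rewrite (HS y x), (hinner_sym Y y (T x)) in H. lra.
Qed.

Lemma positive_sq_le T b x : linear_map T -> symmetric T -> positive T -> bounded_by T b ->
  hinner (T x) (T x) <= b * hinner (T x) x.
Proof.
  intros HL HS Hp HB.
  pose proof (positive_cauchy_schwarz T x (T x) HL HS Hp) as G.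
  assert (G2 : hinner (T (T x)) (T x) <= b * hinner (T x) (T x)).
  { eapply Rle_trans; [apply hinner_le_norm|]. rewrite <- hnorm_sq.
    pose proof (HB (T x)). pose proof (hnorm_ge0 (T x)). nra. }
  pose proof (Hp x). pose proof (hinner_pos Y (T x)).
  destruct (Req_dec (hinner (T x) (T x)) 0) as [E|E].
  - apply hinner_def in E. rewrite E, !hinner_zero_l. lra.
  - assert (0 < hinner (T x) (T x)) by lra. nra.
Qed.

Lemma form_le_of_unit_form_le T M : linear_map T ->
  (forall x, hnorm x = 1 -> hinner (T x) x <= M) -> forall x, hinner (T x) x <= M * hinner x x.
Proof.
  intros [_ Ls] H x. destruct (Req_dec (hnorm x) 0) as [Z|Z].
  { apply hnorm_eq0 in Z. subst. rewrite !hinner_zero_r. lra. }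
  assert (Hx : 0 < hnorm x) by (pose proof (hnorm_ge0 x); lra).
  pose proof (H _ (hnorm_normalize x Hx)) as G.
  rewrite Ls, hinner_scal, hinner_scal_r in G. rewrite <- hnorm_sq.
  replace (hinner (T x) x) with (/ hnorm x * (/ hnorm x * hinner (T x) x) * (hnorm x * hnorm x))
    by (field; lra).
  apply Rmult_le_compat_r; nra.
Qed.

(* If [M] bounds the form of [T] from above, then [M - T] is positive, and the Cauchy-Schwarz
   inequality for its form turns a unit vector almost attaining [M] into an approximate
   eigenvector. *)
Lemma sub_scal_sq_le_form_defect T C M x : linear_map T -> symmetric T -> bounded_by T C ->
  (forall x, hinner (T x) x <= M * hinner x x) -> hnorm x = 1 ->
  hinner (sub_scal T M x) (sub_scal T M x) <= (Rabs M + C) * (M - hinner (T x) x).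
Proof.
  intros HL HS HB Hup Hx.
  set (S := fun v => hsub (hscal M v) (T v)).
  assert (SL : linear_map S).
  { destruct HL as [L1 L2]. unfold S. split; intros; rewrite ?L1, ?L2; hvec_eq. }
  assert (SS : symmetric S).
  { intros a b. unfold S. autorewrite with hinner_l hinner_r. rewrite HS, (hinner_sym Y a b). ring. }
  assert (SP : positive S).
  { intro v. unfold S. autorewrite with hinner_l. specialize (Hup v). lra. }
  assert (SB : bounded_by S (Rabs M + C)).
  { intro v. unfold S. eapply Rle_trans; [apply hnorm_sub|]. rewrite hnorm_scal.
    specialize (HB v). lra. }
  pose proof (positive_sq_le S _ x SL SS SP SB) as G.
  replace (sub_scal T M x) with (hopp (S x)) by (unfold sub_scal, S; hvec_eq).
  rewrite hinner_opp_l, hinner_opp_r, Ropp_involutive.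
  replace (M - hinner (T x) x) with (hinner (S x) x); auto.
  unfold S. autorewrite with hinner_l. rewrite <- hnorm_sq, Hx. ring.
Qed.

Lemma approx_eigenvalue_top T C (e0 : Y) : linear_map T -> symmetric T -> bounded_by T C ->
  hnorm e0 = 1 -> exists M, (forall x, hinner (T x) x <= M * hinner x x) /\ approx_eigenvalue T M.
Proof.
  intros HL HS HB He0.
  set (E := fun r => exists x, hnorm x = 1 /\ r = hinner (T x) x).
  assert (Eb : bound E).
  { exists C. intros r [x [Hx ->]]. eapply Rle_trans; [apply hinner_le_norm|].
    rewrite Hx. specialize (HB x). rewrite Hx in HB. lra. }
  destruct (completeness E Eb (ex_intro _ _ (ex_intro _ e0 (conj He0 eq_refl)))) as [M [HM1 HM2]].
  assert (Hup : forall x, hinner (T x) x <= M * hinner x x).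
  { apply form_le_of_unit_form_le; auto. intros x Hx. apply HM1. now exists x. }
  exists M. split; auto. intros eps Heps.
  set (b := Rabs M + C). assert (Hb : 0 <= b).
  { pose proof (Rabs_pos M). pose proof (bounded_by_nonneg T C e0 HB He0). unfold b. lra. }
  set (eta := eps * eps / (b + 1)).
  assert (Heta : 0 < eta) by (unfold eta; apply Rdiv_lt_0_compat; nra).
  assert (Hx : exists x, hnorm x = 1 /\ M - eta < hinner (T x) x).
  { apply NNPP. intro Hn. assert (M <= M - eta); [|lra]. apply HM2. intros r [x [Hx ->]].
    apply Rnot_lt_le. intro. apply Hn. now exists x. }
  destruct Hx as [x [Hx1 Hx2]]. exists x. split; auto.
  pose proof (sub_scal_sq_le_form_defect T C M x HL HS HB Hup Hx1) as G. fold b in G.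
  pose proof (Hup x). rewrite <- hnorm_sq, Hx1 in H.
  assert (Hbe : (b + 1) * eta = eps * eps) by (unfold eta; field; lra).
  assert (hnorm (sub_scal T M x) * hnorm (sub_scal T M x) < eps * eps) by (rewrite hnorm_sq; nra).
  pose proof (hnorm_ge0 (sub_scal T M x)). nra.
Qed.

Lemma approx_eigenvalue_bottom T C (e0 : Y) : linear_map T -> symmetric T -> bounded_by T C ->
  hnorm e0 = 1 -> exists m, (forall x, m * hinner x x <= hinner (T x) x) /\ approx_eigenvalue T m.
Proof.
  intros HL HS HB He.
  set (T' := fun x => hopp (T x)).
  assert (L' : linear_map T').
  { destruct HL as [La Ls]. unfold T'. split; intros; rewrite ?La, ?Ls; hvec_eq. }
  assert (S' : symmetric T') by (intros x y; unfold T'; now rewrite hinner_opp_l, hinner_opp_r, HS).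
  assert (B' : bounded_by T' C) by (intro x; unfold T'; rewrite hnorm_opp; auto).
  destruct (approx_eigenvalue_top T' C e0 L' S' B' He) as [M [H1 H2]].
  exists (- M). split.
  - intro x. specialize (H1 x). unfold T' in H1. rewrite hinner_opp_l in H1. lra.
  - intros eps Heps. destruct (H2 eps Heps) as [x [Hx1 Hx2]]. exists x. split; auto.
    replace (sub_scal T (- M) x) with (hopp (sub_scal T' M x)) by (unfold sub_scal, T'; hvec_eq).
    now rewrite hnorm_opp.
Qed.

Lemma approx_eigenvalue_ge_form_bound T a r :
  (forall v, a * hinner v v <= hinner (T v) v) -> approx_eigenvalue T r -> a <= r.
Proof.
  intros Ha Hr. apply Rnot_lt_le. intro Hc. destruct (Hr (a - r)) as [v [Hv1 Hv2]]; [lra|].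
  pose proof (hinner_le_norm (sub_scal T r v) v) as H. specialize (Ha v).
  unfold sub_scal in H, Hv2. rewrite hinner_sub_l, hinner_scal, <- (hnorm_sq v), Hv1 in H.
  rewrite <- (hnorm_sq v), Hv1 in Ha. lra.
Qed.

Lemma bounded_by_approx_eigenvalue T C (e0 : Y) : linear_map T -> symmetric T -> bounded_by T C ->
  hnorm e0 = 1 -> exists r, approx_eigenvalue T r /\ bounded_by T (Rabs r).
Proof.
  intros HL HS HB He.
  destruct (approx_eigenvalue_top T C e0 HL HS HB He) as [M [HM1 HM2]].
  destruct (approx_eigenvalue_bottom T C e0 HL HS HB He) as [m [Hm1 Hm2]].
  assert (Hform : forall r, Rabs M <= Rabs r -> Rabs m <= Rabs r ->
            bounded_by T (Rabs r)).
  { intros r H1 H2. apply bounded_of_form_bound; auto; [apply Rabs_pos|].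
    intro x. specialize (HM1 x). specialize (Hm1 x). pose proof (hinner_pos Y x).
    pose proof (Rle_abs M). pose proof (Rle_abs (- m)) as Hm. rewrite Rabs_Ropp in Hm.
    apply Rabs_le. split; nra. }
  destruct (Rle_lt_dec (Rabs m) (Rabs M)).
  - exists M. split; auto. apply Hform; lra.
  - exists m. split; auto. apply Hform; lra.
Qed.

End BoundedSymmetric.

Section PowerIteration.
Context {Y : RHilbert}.
Implicit Types x y z : Y.
Implicit Types T : Y -> Y.

Lemma iter_linear T m : linear_map T -> linear_map (fun x => Nat.iter m T x).
Proof.
  intro HL. induction m as [|m IH]; [split; intros; reflexivity|].
  exact (linear_comp T _ HL IH).
Qed.

Lemma iter_symmetric T m x y : symmetric T ->
  hinner (Nat.iter m T x) y = hinner x (Nat.iter m T y).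
Proof.
  intro HS. revert x y. induction m as [|m IH]; intros; [reflexivity|].
  now rewrite Nat.iter_succ, HS, IH, Nat.iter_succ_r.
Qed.

Lemma iter_fixed T m x : T x = x -> Nat.iter m T x = x.
Proof. intro H. induction m as [|m IH]; [reflexivity|]. now rewrite Nat.iter_succ, IH. Qed.

(* For a symmetric contraction, [|T^p x|^2] decreases to some [l], and
   [|T^(2p) x - T^(2q) x|^2 = |T^(2p) x|^2 + |T^(2q) x|^2 - 2 |T^(p+q) x|^2]. *)
Lemma symmetric_contraction_even_iterates T x :
  linear_map T -> symmetric T -> bounded_by T 1 ->
  exists z, hconverges (fun p => Nat.iter (2 * p) T x) z /\ T (T z) = z.
Proof.
  intros HL HS HB.
  set (a := fun p => hinner (Nat.iter p T x) (Nat.iter p T x)).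
  assert (Hdec : Un_decreasing a).
  { intro p. unfold a. rewrite Nat.iter_succ, <- !hnorm_sq. pose proof (HB (Nat.iter p T x)).
    pose proof (hnorm_ge0 (T (Nat.iter p T x))). nra. }
  assert (Hlb : has_lb a).
  { exists 0. intros r [p ->]. unfold opp_seq, a. pose proof (hinner_pos Y (Nat.iter p T x)). lra. }
  destruct (decreasing_cv a Hdec Hlb) as [l Hl]. pose proof (decreasing_ineq a l Hdec Hl) as Hinf.
  set (zs := fun p => Nat.iter (2 * p) T x).
  assert (Hpair : forall i j, hinner (Nat.iter i T x) (Nat.iter j T x) = hinner (Nat.iter (i + j) T x) x).
  { intros i j. rewrite iter_symmetric, <- Nat.iter_add by auto. apply hinner_sym. }
  assert (Hdist : forall p q, hinner (hsub (zs p) (zs q)) (hsub (zs p) (zs q)) =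
                              a (2 * p)%nat + a (2 * q)%nat - 2 * a (p + q)%nat).
  { intros p q. unfold zs, a. autorewrite with hinner_l hinner_r. rewrite !Hpair.
    replace (2 * q + 2 * p)%nat with (2 * p + 2 * q)%nat by lia.
    replace (p + q + (p + q))%nat with (2 * p + 2 * q)%nat by lia. ring. }
  assert (Hcauchy : hcauchy zs).
  { intros e He. destruct (Hl (e * e / 2)) as [N HN]; [nra|].
    exists N. intros p q Hp Hq. apply Rnot_le_lt. intro Hc.
    assert (Hsq : e * e <= hinner (hsub (zs p) (zs q)) (hsub (zs p) (zs q))) by (rewrite <- hnorm_sq; nra).
    rewrite Hdist in Hsq. pose proof (Hinf (p + q)%nat).
    specialize (HN (2 * p)%nat ltac:(lia)) as H1. specialize (HN (2 * q)%nat ltac:(lia)) as H2.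
    unfold Rdist in H1, H2. apply Rabs_def2 in H1. apply Rabs_def2 in H2. lra. }
  destruct (hcomplete Y zs Hcauchy) as [z Hz]. change (hconverges zs z) in Hz.
  exists z. split; auto.
  assert (HTT : forall u v, hnorm (hsub (T (T u)) (T (T v))) <= 1 * hnorm (hsub u v)).
  { intros u v. rewrite <- (linear_sub (fun v => T (T v))) by exact (linear_comp T T HL HL).
    eapply Rle_trans; [apply HB|]. rewrite !Rmult_1_l. eapply Rle_trans; [apply HB|]. lra. }
  apply (hconverges_unique (fun p => T (T (zs p)))).
  - exact (hconverges_lipschitz (fun v => T (T v)) 1 zs z HTT Hz).
  - apply (hconverges_ext (fun p => zs (p + 1)%nat)); [|now apply hconverges_shift].
    intro p. unfold zs. now replace (2 * (p + 1))%nat with (S (S (2 * p))) by lia.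
Qed.

End PowerIteration.

(* An abstract form of "0 is an isolated simple eigenvalue": a bounded symmetric [K] whose kernel
   is spanned by [phi] and such that [K - r] is bounded below for [0 < |r| < 1/2] is bounded below
   on [phi]'s orthogonal. *)
Section IsolatedKernel.
Context {Y : RHilbert}.
Implicit Types x y z v : Y.

Variable K : Y -> Y.
Variable CK : R.
Variable phi : Y.
Hypothesis K_linear : linear_map K.
Hypothesis K_symmetric : symmetric K.
Hypothesis K_bounded : bounded_by K CK.
Hypothesis K_gap : forall r, 0 < Rabs r < 1/2 -> exists c, bounded_below (sub_scal K r) c.
Hypothesis phi_unit : hnorm phi = 1.
Hypothesis K_kernel : forall z, K z = hzero -> exists c, z = hscal c phi.
Hypothesis K_phi : K phi = hzero.

Let K2 := fun x => K (K x).

Lemma K2_linear : linear_map K2. Proof. exact (linear_comp K K K_linear K_linear). Qed.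
Lemma K2_symmetric : symmetric K2. Proof. intros x y. unfold K2. now rewrite !K_symmetric. Qed.
Lemma K2_form x : hinner (K2 x) x = hinner (K x) (K x).
Proof. unfold K2. now rewrite K_symmetric. Qed.
Lemma K2_positive : positive K2. Proof. intro x. rewrite K2_form. apply hinner_pos. Qed.
Lemma K2_bounded : bounded_by K2 (CK * CK).
Proof. exact (bounded_by_comp K K CK CK K_bounded K_bounded (bounded_by_nonneg K CK phi K_bounded phi_unit)). Qed.

Lemma K2_gap r : 0 < r < 1/4 -> exists c, bounded_below (sub_scal K2 r) c.
Proof.
  intro Hr. set (q := sqrt r).
  assert (Hq : 0 < q) by (apply sqrt_lt_R0; lra).
  assert (Hq2 : q * q = r) by (apply sqrt_sqrt; lra).
  destruct (K_gap q) as [c1 B1]; [rewrite Rabs_pos_eq; nra|].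
  destruct (K_gap (- q)) as [c2 B2]; [rewrite Rabs_Ropp, Rabs_pos_eq; nra|].
  exists (c1 * c2). destruct (bounded_below_comp _ _ _ _ B1 B2) as [Hc Hb]. split; auto.
  intro x. replace (sub_scal K2 r x) with (sub_scal K q (sub_scal K (- q) x)); [apply Hb|].
  unfold sub_scal, K2. destruct K_linear as [_ Ks]. rewrite linear_sub, Ks by auto.
  rewrite <- Hq2. hvec_eq.
Qed.

(* [K2] has no spectrum in [(0, 1/4)], hence [K2 (K2 - 1/4) >= 0]: if the bottom [m] of the form
   of [K2^2 - K2/4] were negative, [m = - r1 r2] with [r1 + r2 = 1/4], [0 < r1, r2 < 1/4], and
   [K2^2 - K2/4 - m = (K2 - r1)(K2 - r2)] would be bounded below. *)
Lemma K2_form_le_sq x : (1/4) * hinner (K2 x) x <= hinner (K2 x) (K2 x).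
Proof.
  set (G := fun v => hsub (K2 (K2 v)) (hscal (1/4) (K2 v))).
  assert (GL : linear_map G).
  { destruct K2_linear as [E1 E2]. unfold G. split; intros; rewrite ?E1, ?E2; hvec_eq. }
  assert (GS : symmetric G).
  { intros a b. unfold G. autorewrite with hinner_l hinner_r. rewrite !K2_symmetric. ring. }
  assert (GB : bounded_by G (CK * CK * (CK * CK) + 1/4 * (CK * CK))).
  { intro v. unfold G. eapply Rle_trans; [apply hnorm_sub|]. rewrite hnorm_scal, Rabs_pos_eq by lra.
    pose proof (K2_bounded (K2 v)). pose proof (K2_bounded v).
    pose proof (bounded_by_nonneg K CK phi K_bounded phi_unit).
    assert (CK * CK * hnorm (K2 v) <= CK * CK * (CK * CK * hnorm v)) by (apply Rmult_le_compat_l; nra).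
    lra. }
  destruct (approx_eigenvalue_bottom G _ phi GL GS GB phi_unit) as [m [Hm1 Hm2]].
  assert (Hmlow : - (1/64) <= m).
  { apply (approx_eigenvalue_ge_form_bound G); auto. intro v.
    pose proof (hinner_pos Y (hsub (K2 v) (hscal (1/8) v))) as H.
    unfold G. autorewrite with hinner_l hinner_r in H |- *. rewrite (K2_symmetric (K2 v) v).
    rewrite (hinner_sym Y v (K2 v)) in H. lra. }
  assert (Hm0 : 0 <= m).
  { apply Rnot_lt_le. intro Hc.
    set (s := sqrt (1/16 + 4 * m)).
    assert (Hs2 : s * s = 1/16 + 4 * m) by (apply sqrt_sqrt; lra).
    assert (Hs : 0 <= s < 1/4) by (split; [apply sqrt_pos | nra]).
    set (r1 := (1/4 + s) / 2). set (r2 := (1/4 - s) / 2).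
    destruct (K2_gap r1) as [c1 B1]; [unfold r1; lra|].
    destruct (K2_gap r2) as [c2 B2]; [unfold r2; lra|].
    apply (bounded_below_not_approx_eigenvalue G m (c1 * c2)); auto.
    assert (Hfactor : forall v, sub_scal G m v = sub_scal K2 r1 (sub_scal K2 r2 v)).
    { intro v. unfold sub_scal, G. rewrite (linear_sub K2 _ _ K2_linear).
      destruct K2_linear as [_ E2]. rewrite E2.
      assert (m = - (r1 * r2)) by (unfold r1, r2; nra).
      assert (r1 + r2 = 1/4) by (unfold r1, r2; lra).
      rewrite H, <- H0. hvec_eq. }
    destruct (bounded_below_comp _ _ _ _ B1 B2) as [Hc12 Hb]. split; auto.
    intro v. rewrite Hfactor. apply Hb. }
  specialize (Hm1 x). unfold G in Hm1. rewrite hinner_sub_l, hinner_scal, K2_symmetric in Hm1.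
  pose proof (hinner_pos Y x). nra.
Qed.

Lemma K2_bounded_below_on_range v : (1/4) * hnorm (K2 v) <= hnorm (K2 (K2 v)).
Proof.
  set (w := K2 v).
  pose proof (positive_cauchy_schwarz K2 v w K2_linear K2_symmetric K2_positive) as G.
  change (hinner (K2 v) w) with (hinner w w) in G.
  pose proof (K2_form_le_sq v) as Q. change (hinner (K2 v) (K2 v)) with (hinner w w) in Q.
  pose proof (K2_positive w). pose proof (K2_positive v). pose proof (hinner_pos Y w).
  assert (Q2 : hinner w w * hinner w w <= 4 * hinner w w * hinner (K2 w) w).
  { eapply Rle_trans; [apply G|]. apply Rmult_le_compat_r; lra. }
  assert (Q3 : (1/4) * hinner w w <= hinner (K2 w) w).
  { destruct (Req_dec (hinner w w) 0) as [Z|Z]; [rewrite Z; lra|].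
    assert (0 < hinner w w) by lra. nra. }
  pose proof (hinner_le_norm (K2 w) w). rewrite <- hnorm_sq in Q3.
  pose proof (hnorm_ge0 w). pose proof (hnorm_ge0 (K2 w)).
  destruct (Req_dec (hnorm w) 0) as [Z|Z]; [rewrite Z; lra|].
  assert (0 < hnorm w) by lra. nra.
Qed.

(* Power iteration with the damped operator [1 - K2/beta], a symmetric contraction fixing [phi]. *)
Let beta := CK * CK + 1.
Let damp := fun x => hsub x (hscal (/ beta) (K2 x)).

Lemma beta_pos : 0 < beta. Proof. unfold beta. nra. Qed.

Lemma K2_bounded_beta : bounded_by K2 beta.
Proof. intro v. eapply Rle_trans; [apply K2_bounded|]. unfold beta. pose proof (hnorm_ge0 v). nra. Qed.

Lemma damp_linear : linear_map damp.
Proof. destruct K2_linear as [E1 E2]. unfold damp. split; intros; rewrite ?E1, ?E2; hvec_eq. Qed.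
Lemma damp_symmetric : symmetric damp.
Proof. intros a b. unfold damp. autorewrite with hinner_l hinner_r. rewrite K2_symmetric. ring. Qed.
Lemma damp_K2 v : damp (K2 v) = K2 (damp v).
Proof. unfold damp. rewrite (linear_sub K2 _ _ K2_linear). destruct K2_linear as [_ E2]. now rewrite E2. Qed.
Lemma damp_phi : damp phi = phi.
Proof. unfold damp, K2. rewrite K_phi, linear_zero by auto. hvec_eq. Qed.

Lemma damp_bounded : bounded_by damp 1.
Proof.
  pose proof beta_pos.
  apply bounded_of_form_bound; [exact damp_linear | exact damp_symmetric | lra|]. intro v.
  unfold damp. autorewrite with hinner_l. rewrite <- hnorm_sq.
  pose proof (K2_positive v). pose proof (hinner_le_norm (K2 v) v). pose proof (K2_bounded_beta v).
  pose proof (hnorm_ge0 v). pose proof (hnorm_ge0 (K2 v)).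
  assert (hinner (K2 v) v <= beta * (hnorm v * hnorm v)) by nra.
  assert (/ beta * hinner (K2 v) v <= hnorm v * hnorm v).
  { apply Rmult_le_reg_l with beta; auto. rewrite <- Rmult_assoc, Rinv_r by lra. lra. }
  assert (0 <= / beta * hinner (K2 v) v) by (apply Rmult_le_pos; [apply Rlt_le, Rinv_0_lt_compat|]; lra).
  apply Rabs_le. lra.
Qed.

(* [damp^2 z = z] forces [<K2 z, K2 z> = 2 beta <K2 z, z>], incompatible with
   [<K2 z, K2 z> <= beta <K2 z, z>] unless [K2 z = 0]. *)
Lemma damp_sq_fixed_K2 z : damp (damp z) = z -> K2 z = hzero.
Proof.
  intro Hfix. pose proof beta_pos as Hb.
  assert (G1 : hinner (damp z) (damp z) = hinner z z) by (now rewrite <- damp_symmetric, Hfix).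
  unfold damp in G1. autorewrite with hinner_l hinner_r in G1.
  rewrite (hinner_sym Y z (K2 z)) in G1.
  pose proof (positive_sq_le K2 beta z K2_linear K2_symmetric K2_positive K2_bounded_beta) as G2.
  pose proof (K2_positive z).
  assert (G3 : hinner (K2 z) (K2 z) = 2 * beta * hinner (K2 z) z).
  { apply Rmult_eq_reg_l with (/ beta * / beta).
    - replace (/ beta * / beta * (2 * beta * hinner (K2 z) z)) with (2 * / beta * hinner (K2 z) z)
        by (field; lra). nra.
    - apply Rgt_not_eq. apply Rmult_lt_0_compat; apply Rinv_0_lt_compat; lra. }
  assert (hinner (K2 z) z <= 0) by (apply Rmult_le_reg_l with beta; nra).
  apply hinner_def. pose proof (hinner_pos Y (K2 z)). lra.
Qed.

Lemma sub_iter_damp_in_range x m : exists y, hsub x (Nat.iter m damp x) = K2 y.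
Proof.
  induction m as [|m [y Hy]].
  - exists hzero. rewrite linear_zero by exact K2_linear. apply hsub_diag.
  - exists (hadd y (Nat.iter m damp (hscal (/ beta) x))).
    destruct (iter_linear damp m damp_linear) as [P1 P2].
    destruct K2_linear as [E1 E2]. rewrite E1, (Nat.iter_swap_gen _ _ K2 damp damp (fun v => eq_sym (damp_K2 v)) m).
    rewrite E2, <- Hy, Nat.iter_succ_r, P2.
    assert (Eq : Nat.iter m damp (damp x) =
                 hsub (Nat.iter m damp x) (hscal (/ beta) (Nat.iter m damp (K2 x)))).
    { unfold damp at 2. rewrite (linear_sub (fun v => Nat.iter m damp v) _ _ (iter_linear damp m damp_linear)).
      now rewrite P2. }
    rewrite Eq. hvec_eq.
Qed.

(* The even damped iterates of [x] converge to a vector killed by [K] and orthogonal to [phi]. *)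
Lemma damp_even_iterates_vanish x : hinner x phi = 0 ->
  hconverges (fun p => Nat.iter (2 * p) damp x) hzero.
Proof.
  intro Hx.
  destruct (symmetric_contraction_even_iterates damp x damp_linear damp_symmetric damp_bounded)
    as [z [Hz Hfix]].
  replace hzero with z; auto.
  assert (HKz : K z = hzero).
  { apply hinner_def. rewrite <- K2_form. fold K2. rewrite (damp_sq_fixed_K2 z Hfix). apply hinner_zero_l. }
  destruct (K_kernel z HKz) as [c ->].
  assert (Hin : hinner (hscal c phi) phi = 0).
  { apply (closed_hinner_eq phi 0 (fun p => Nat.iter (2 * p) damp x)); [|exact Hz]. intro p. cbv beta.
    rewrite iter_symmetric by exact damp_symmetric.
    now rewrite (iter_fixed damp _ phi damp_phi). }
  rewrite hinner_scal, <- hnorm_sq, phi_unit in Hin. replace c with 0 by lra. apply hscal0.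
Qed.

(* [x] minus its damped iterates lies in the range of [K2], on which [K2] is bounded below. *)
Lemma K2_bounded_below_perp x : hinner x phi = 0 -> / 4 * hnorm x <= hnorm (K2 x).
Proof.
  intro Hx. pose proof beta_pos as Hb. apply Rle_plus_epsilon. intros eps Heps.
  destruct (damp_even_iterates_vanish x Hx (eps / (beta + 1))) as [N HN]; [apply Rdiv_lt_0_compat; lra|].
  specialize (HN N (le_n _)). set (zN := Nat.iter (2 * N) damp x) in *.
  replace (hsub zN hzero) with zN in HN by hvec_eq.
  assert ((beta + 1) * hnorm zN <= eps).
  { apply (Rmult_lt_compat_l (beta + 1)) in HN; [|lra].
    replace ((beta + 1) * (eps / (beta + 1))) with eps in HN by (field; lra). lra. }
  destruct (sub_iter_damp_in_range x (2 * N)) as [y Hy]. fold zN in Hy.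
  pose proof (K2_bounded_below_on_range y) as R1. rewrite <- Hy, (linear_sub K2 _ _ K2_linear) in R1.
  pose proof (hnorm_sub (K2 x) (K2 zN)). pose proof (K2_bounded_beta zN).
  pose proof (hnorm_sub_ge x zN). pose proof (hnorm_ge0 zN). lra.
Qed.

Lemma isolated_kernel_bounded_below :
  exists c, 0 < c /\ forall x, hinner x phi = 0 -> c * hnorm x <= hnorm (K x).
Proof.
  pose proof beta_pos as Hb.
  exists (/ (4 * beta)). split; [apply Rinv_0_lt_compat; lra|]. intros x Hx.
  pose proof (K2_bounded_below_perp x Hx).
  assert (hnorm (K2 x) <= beta * hnorm (K x)).
  { unfold K2. eapply Rle_trans; [apply K_bounded|]. apply Rmult_le_compat_r; [apply hnorm_ge0|].
    unfold beta. nra. }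
  apply (Rmult_le_reg_l (4 * beta)); [lra|]. rewrite <- Rmult_assoc, Rinv_r by lra. lra.
Qed.

End IsolatedKernel.

(** * The operator [L] on the orthogonal of [phi] *)

Section SelfAdjoint.
Context {Y : RHilbert}.
Implicit Types x y z v w : Y.

Variable D : Y -> Prop.
Variable L : Y -> Y.
Variable lam : R.
Variable phi : Y.
Hypothesis L_self_adjoint : self_adjoint D L.
Hypothesis lam_simple : simple_isolated_eigenvalue D L lam phi.

Lemma dom_zero : D hzero. Proof. destruct L_self_adjoint as [[H _] _]; auto. Qed.
Lemma dom_add x y : D x -> D y -> D (hadd x y). Proof. destruct L_self_adjoint as [[_ [H _]] _]; auto. Qed.
Lemma dom_scal a x : D x -> D (hscal a x). Proof. destruct L_self_adjoint as [[_ [_ H]] _]; auto. Qed.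
Lemma dom_sub x y : D x -> D y -> D (hsub x y).
Proof. intros. unfold hsub. rewrite hopp_scal. auto using dom_add, dom_scal. Qed.
Lemma L_add x y : D x -> D y -> L (hadd x y) = hadd (L x) (L y).
Proof. destruct L_self_adjoint as [_ [_ [[H _] _]]]; auto. Qed.
Lemma L_scal a x : D x -> L (hscal a x) = hscal a (L x).
Proof. destruct L_self_adjoint as [_ [_ [[_ H] _]]]; auto. Qed.
Lemma L_sub x y : D x -> D y -> L (hsub x y) = hsub (L x) (L y).
Proof. intros. unfold hsub. rewrite !hopp_scal, L_add, L_scal; auto using dom_scal. Qed.
Lemma L_sym x y : D x -> D y -> hinner (L x) y = hinner x (L y).
Proof. destruct L_self_adjoint as [_ [_ [_ [H _]]]]; auto. Qed.

Lemma phi_dom : D phi. Proof. destruct lam_simple as [H _]; auto. Qed.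
Lemma phi_norm : hnorm phi = 1. Proof. destruct lam_simple as [_ [H _]]; auto. Qed.
Lemma phi_inner : hinner phi phi = 1. Proof. rewrite <- hnorm_sq, phi_norm. ring. Qed.
Lemma L_phi : L phi = hscal lam phi. Proof. destruct lam_simple as [_ [_ [H _]]]; auto. Qed.
Lemma L_simple x : D x -> L x = hscal lam x -> exists c, x = hscal c phi.
Proof. destruct lam_simple as [_ [_ [_ [H _]]]]; auto. Qed.
Lemma L_isolated :
  exists eps, eps > 0 /\ forall mu, mu <> lam -> Rabs (mu - lam) < eps -> in_resolvent D L mu.
Proof. destruct lam_simple as [_ [_ [_ [_ H]]]]; auto. Qed.

Lemma L_hinner_phi x : D x -> hinner (L x) phi = lam * hinner x phi.
Proof. intro. rewrite L_sym, L_phi, hinner_scal_r by auto using phi_dom. reflexivity. Qed.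
Lemma L_perp x : D x -> hinner x phi = 0 -> hinner (L x) phi = 0.
Proof. intros Dx Hx. rewrite L_hinner_phi, Hx by auto. ring. Qed.

Lemma sub_scal_L_scal mu a x : D x -> sub_scal L mu (hscal a x) = hscal a (sub_scal L mu x).
Proof. intro. unfold sub_scal. rewrite L_scal by auto. hvec_eq. Qed.

Record resolvent (mu : R) (Rr : Y -> Y) (C : R) : Prop := {
  res_linear : linear_map Rr;
  res_bounded : bounded_by Rr C;
  res_dom : forall y, D (Rr y);
  res_right : forall y, sub_scal L mu (Rr y) = y;
  res_left : forall x, D x -> Rr (sub_scal L mu x) = x }.

Lemma resolvent_of_in_resolvent mu : in_resolvent D L mu -> exists Rr C, resolvent mu Rr C.
Proof.
  intros [Rr [[L1 L2] [[C HC] [H1 H2]]]]. exists Rr, C.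
  split; auto; [split; auto | |]; intro y; apply H1.
Qed.

Lemma resolvent_bound_nonneg mu Rr C : resolvent mu Rr C -> 0 <= C.
Proof. intro H. exact (bounded_by_nonneg Rr C phi (res_bounded _ _ _ H) phi_norm). Qed.

Lemma resolvent_lower_bound mu Rr C x : resolvent mu Rr C -> D x ->
  hnorm x <= C * hnorm (sub_scal L mu x).
Proof. intros H Dx. rewrite <- (res_left _ _ _ H x Dx) at 1. apply (res_bounded _ _ _ H). Qed.

Lemma resolvent_symmetric mu Rr C : resolvent mu Rr C -> symmetric Rr.
Proof.
  intros H a b. rewrite <- (res_right _ _ _ H b) at 1. rewrite <- (res_right _ _ _ H a) at 2.
  unfold sub_scal. autorewrite with hinner_l hinner_r. rewrite L_sym by apply (res_dom _ _ _ H).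
  rewrite (hinner_sym Y (Rr a) (Rr b)). ring.
Qed.

Lemma resolvent_phi mu Rr C : resolvent mu Rr C -> mu <> lam -> Rr phi = hscal (/ (lam - mu)) phi.
Proof.
  intros H Hm. assert (E : sub_scal L mu phi = hscal (lam - mu) phi) by (unfold sub_scal; rewrite L_phi; hvec_eq).
  pose proof (res_left _ _ _ H phi phi_dom) as G. rewrite E in G. destruct (res_linear _ _ _ H) as [_ S].
  rewrite S in G. rewrite <- G at 2. rewrite hscal_assoc, Rinv_l, hscal_one by lra. reflexivity.
Qed.

Lemma resolvent_perp mu Rr C y : resolvent mu Rr C -> mu <> lam -> hinner y phi = 0 ->
  hinner (Rr y) phi = 0.
Proof.
  intros H Hm Hy. rewrite (resolvent_symmetric _ _ _ H), (resolvent_phi _ _ _ H Hm), hinner_scal_r, Hy.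
  ring.
Qed.

Definition perp_approx_eigenvalue (l : R) : Prop :=
  forall eps, eps > 0 -> exists w, D w /\ hinner w phi = 0 /\ hnorm w = 1 /\
    hnorm (sub_scal L l w) < eps.

Lemma perp_approx_eigenvalue_spectrum l : perp_approx_eigenvalue l -> in_spectrum D L l.
Proof.
  intros H Hr. destruct (resolvent_of_in_resolvent l Hr) as [Rr [C HR]].
  pose proof (resolvent_bound_nonneg _ _ _ HR).
  destruct (H (/ (C + 1))) as [w [Dw [_ [Hw1 Hw2]]]]; [apply Rinv_0_lt_compat; lra|].
  pose proof (resolvent_lower_bound _ _ _ w HR Dw) as B. rewrite Hw1 in B.
  assert (C * hnorm (sub_scal L l w) <= C * / (C + 1)) by (apply Rmult_le_compat_l; lra).
  assert (C * / (C + 1) < 1).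
  { apply (Rmult_lt_reg_r (C + 1)); [lra|]. rewrite Rmult_assoc, Rinv_l by lra. lra. }
  lra.
Qed.

Lemma perp_approx_eigenvalue_of_family l a : 0 < a ->
  (forall eps, eps > 0 -> exists v, D v /\ hinner v phi = 0 /\ a <= hnorm v /\
     hnorm (sub_scal L l v) < eps) ->
  perp_approx_eigenvalue l.
Proof.
  intros Ha H eps Heps. destruct (H (eps * a)) as [v [Dv [Hv [Hva Hvl]]]]; [nra|].
  assert (Hvp : 0 < hnorm v) by lra.
  exists (hscal (/ hnorm v) v). split; [|split; [|split]].
  - now apply dom_scal.
  - rewrite hinner_scal, Hv. ring.
  - now apply hnorm_normalize.
  - rewrite sub_scal_L_scal, hnorm_scal, Rabs_pos_eq by (auto; apply Rlt_le, Rinv_0_lt_compat; lra).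
    apply (Rmult_lt_reg_l (hnorm v)); auto. rewrite <- Rmult_assoc, Rinv_r by lra. nra.
Qed.

(* [L - lam] is bounded below on [phi]'s orthogonal: apply [isolated_kernel_bounded_below] to
   [K = 1 + delta R(lam + delta)], which agrees with [R(lam + delta) (L - lam)] on the domain. *)
Section ShiftedResolvent.
Variables (delta : R) (Rr : Y -> Y) (C : R).
Hypothesis delta_pos : 0 < delta.
Hypothesis near_resolvent : forall mu, mu <> lam -> Rabs (mu - lam) <= delta -> in_resolvent D L mu.
Hypothesis Rr_resolvent : resolvent (lam + delta) Rr C.

Let K := fun y => hadd y (hscal delta (Rr y)).

Lemma K_on_dom x : D x -> K x = Rr (sub_scal L lam x).
Proof.
  intro Dx. destruct (res_linear _ _ _ Rr_resolvent) as [R1 R2].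
  replace (sub_scal L lam x) with (hadd (sub_scal L (lam + delta) x) (hscal delta x))
    by (unfold sub_scal; hvec_eq).
  now rewrite R1, R2, (res_left _ _ _ Rr_resolvent x Dx).
Qed.

Lemma K_linear : linear_map K.
Proof. destruct (res_linear _ _ _ Rr_resolvent) as [R1 R2]. unfold K. split; intros; rewrite ?R1, ?R2; hvec_eq. Qed.

Lemma K_symmetric : symmetric K.
Proof.
  intros a b. unfold K. autorewrite with hinner_l hinner_r.
  rewrite (resolvent_symmetric _ _ _ Rr_resolvent). ring.
Qed.

Lemma K_bounded : bounded_by K (1 + delta * C).
Proof.
  intro y. unfold K. eapply Rle_trans; [apply hnorm_add|]. rewrite hnorm_scal, Rabs_pos_eq by lra.
  pose proof (res_bounded _ _ _ Rr_resolvent y). nra.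
Qed.

Lemma K_phi : K phi = hzero.
Proof.
  unfold K. rewrite (resolvent_phi _ _ _ Rr_resolvent) by lra. rewrite hscal_assoc.
  replace (delta * / (lam - (lam + delta))) with (-1) by (field; lra). hvec_eq.
Qed.

Lemma K_kernel z : K z = hzero -> exists c, z = hscal c phi.
Proof.
  intro Hz. unfold K in Hz.
  assert (Ez : z = hscal (- delta) (Rr z)) by (apply hsub_eq0; rewrite <- Hz; hvec_eq).
  assert (Dz : D z) by (rewrite Ez; apply dom_scal, (res_dom _ _ _ Rr_resolvent)).
  apply L_simple; auto.
  assert (G : sub_scal L (lam + delta) z = hscal (- delta) z).
  { rewrite Ez at 1. rewrite sub_scal_L_scal by apply (res_dom _ _ _ Rr_resolvent).
    now rewrite (res_right _ _ _ Rr_resolvent). }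
  unfold sub_scal in G. apply hsub_eq0. apply hinner_ext. intro y.
  assert (G2 := f_equal (fun v => hinner v y) G). simpl in G2.
  autorewrite with hinner_l in G2 |- *. lra.
Qed.

(* [K - r = (1 - r) (L - l) R(lam + delta)] with [l = lam - delta r / (1 - r)], a point of the
   resolvent set close to [lam]. *)
Lemma K_gap r : 0 < Rabs r < 1/2 -> exists c, bounded_below (sub_scal K r) c.
Proof.
  intros Hr. set (l := lam - delta * (r / (1 - r))).
  assert (H1r : 1/2 < 1 - r) by (pose proof (Rle_abs r); lra).
  destruct (resolvent_of_in_resolvent l) as [Rl [Cl HRl]].
  { pose proof (Rabs_div_one_sub_le r Hr) as Hs.
    assert (Hl : Rabs (l - lam) = delta * Rabs (r / (1 - r))).
    { unfold l. replace (lam - delta * (r / (1 - r)) - lam) with (- (delta * (r / (1 - r)))) by ring.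
      rewrite Rabs_Ropp, Rabs_mult, Rabs_pos_eq by lra. reflexivity. }
    apply near_resolvent; [|nra].
    intro E. rewrite E, Rminus_diag, Rabs_R0 in Hl. nra. }
  pose proof (resolvent_bound_nonneg _ _ _ HRl) as HCl.
  set (k := 1 + Rabs (l - (lam + delta)) * Cl).
  assert (Hk : 0 < k) by (unfold k; pose proof (Rabs_pos (l - (lam + delta))); nra).
  exists ((1 - r) / k). split; [apply Rdiv_lt_0_compat; lra|].
  intro y. set (v := Rr y). assert (Dv : D v) by apply (res_dom _ _ _ Rr_resolvent).
  assert (Hy : y = sub_scal L (lam + delta) v) by (symmetry; apply (res_right _ _ _ Rr_resolvent)).
  set (v' := hscal (1 - r) v). assert (Dv' : D v') by (now apply dom_scal).
  assert (E1 : sub_scal K r y = sub_scal L l v').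
  { unfold sub_scal at 1, K, v'. fold v. rewrite sub_scal_L_scal by auto.
    rewrite Hy at 1 2. unfold sub_scal, l. hvec_eq. field. lra. }
  assert (E3 : y = hscal (/ (1 - r)) (hadd (sub_scal K r y) (hscal (l - (lam + delta)) v'))).
  { rewrite E1. unfold v', sub_scal. rewrite Hy at 1. unfold sub_scal. rewrite L_scal by auto.
    hvec_eq. field. lra. }
  assert (Hv' : hnorm v' <= Cl * hnorm (sub_scal K r y)) by (rewrite E1; now apply (resolvent_lower_bound _ _ _ _ HRl)).
  assert (B : hnorm y <= / (1 - r) * (k * hnorm (sub_scal K r y))).
  { rewrite E3 at 1. rewrite hnorm_scal, Rabs_pos_eq by (apply Rlt_le, Rinv_0_lt_compat; lra).
    apply Rmult_le_compat_l; [apply Rlt_le, Rinv_0_lt_compat; lra|].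
    eapply Rle_trans; [apply hnorm_add|]. rewrite hnorm_scal.
    pose proof (Rabs_pos (l - (lam + delta))). unfold k.
    assert (Rabs (l - (lam + delta)) * hnorm v' <= Rabs (l - (lam + delta)) * (Cl * hnorm (sub_scal K r y)))
      by (apply Rmult_le_compat_l; auto). lra. }
  apply (Rmult_le_reg_l (k / (1 - r))); [apply Rdiv_lt_0_compat; lra|].
  replace (k / (1 - r) * ((1 - r) / k * hnorm y)) with (hnorm y) by (field; lra).
  replace (k / (1 - r) * hnorm (sub_scal K r y)) with (/ (1 - r) * (k * hnorm (sub_scal K r y)))
    by (field; lra). exact B.
Qed.

End ShiftedResolvent.

Lemma L_lam_bounded_below_perp :
  exists c, 0 < c /\ forall x, D x -> hinner x phi = 0 -> c * hnorm x <= hnorm (sub_scal L lam x).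
Proof.
  destruct L_isolated as [e0 [He0 Hiso]].
  set (delta := e0 / 2). assert (Hd : 0 < delta) by (unfold delta; lra).
  assert (Hnear : forall mu, mu <> lam -> Rabs (mu - lam) <= delta -> in_resolvent D L mu)
    by (intros mu Hmu Hd'; apply Hiso; unfold delta in *; auto; lra).
  destruct (resolvent_of_in_resolvent (lam + delta)) as [Rr [C HR]].
  { apply Hnear; [lra|]. replace (lam + delta - lam) with delta by ring. rewrite Rabs_pos_eq; lra. }
  pose proof (resolvent_bound_nonneg _ _ _ HR).
  destruct (isolated_kernel_bounded_below _ _ phi (K_linear delta Rr C HR) (K_symmetric delta Rr C HR)
              (K_bounded delta Rr C Hd HR) (K_gap delta Rr C Hd Hnear HR) phi_norm
              (K_kernel delta Rr C HR) (K_phi delta Rr C Hd HR)) as [c [Hc Hg]].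
  exists (c / (C + 1)). split; [apply Rdiv_lt_0_compat; lra|].
  intros x Dx Hx. specialize (Hg x Hx). rewrite (K_on_dom delta Rr C HR x Dx) in Hg.
  pose proof (res_bounded _ _ _ HR (sub_scal L lam x)).
  apply (Rmult_le_reg_l (C + 1)); [lra|].
  replace ((C + 1) * (c / (C + 1) * hnorm x)) with (c * hnorm x) by (field; lra).
  pose proof (hnorm_ge0 (sub_scal L lam x)). nra.
Qed.

Lemma not_perp_approx_eigenvalue_lam : ~ perp_approx_eigenvalue lam.
Proof.
  intro H. destruct L_lam_bounded_below_perp as [c [Hc Hg]].
  destruct (H c Hc) as [w [Dw [Hw [Hw1 Hw2]]]]. specialize (Hg w Dw Hw). rewrite Hw1 in Hg. lra.
Qed.

Notation P := (Pproj phi).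

Lemma P_perp y : hinner (P y) phi = 0.
Proof. unfold Pproj. autorewrite with hinner_l. rewrite phi_inner. ring. Qed.
Lemma P_id y : hinner y phi = 0 -> P y = y.
Proof. intro H. unfold Pproj. rewrite H. hvec_eq. Qed.
Lemma P_phi : P phi = hzero.
Proof. unfold Pproj. rewrite phi_inner. hvec_eq. Qed.
Lemma P_linear : linear_map P.
Proof. unfold Pproj. split; intros; autorewrite with hinner_l; hvec_eq. Qed.
Lemma P_symmetric : symmetric P.
Proof.
  intros a b. unfold Pproj. autorewrite with hinner_l hinner_r.
  rewrite (hinner_sym Y phi b), (hinner_sym Y a phi). ring.
Qed.
Lemma P_norm_le y : hnorm (P y) <= hnorm y.
Proof.
  pose proof (hnorm_ge0 (P y)). pose proof (hnorm_ge0 y).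
  assert (hnorm (P y) * hnorm (P y) <= hnorm y * hnorm y); [|nra].
  rewrite !hnorm_sq. unfold Pproj. autorewrite with hinner_l hinner_r.
  rewrite phi_inner, (hinner_sym Y phi y). pose proof (Rle_0_sqr (hinner y phi)). unfold Rsqr in *. lra.
Qed.
Lemma P_decompose y : y = hadd (P y) (hscal (hinner y phi) phi).
Proof. unfold Pproj. hvec_eq. Qed.
Definition perp_right_inverse (B : Y -> Y) (nu : R) : Prop :=
  forall y, D (B y) /\ hinner (B y) phi = 0 /\ sub_scal L nu (B y) = P y.

(* [B = (L - nu)^{-1} P]: if [B v ~ r v] with [|v| = 1], then [(L - nu - 1/r) B v ~ 0] and
   [|B v| ~ |r|]. *)
Lemma inverse_approx_eigenvalue B nu r : perp_right_inverse B nu -> r <> 0 ->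
  approx_eigenvalue B r -> perp_approx_eigenvalue (nu + / r).
Proof.
  intros HB Hr Ha.
  assert (Hra : 0 < Rabs r) by (apply Rabs_pos_lt; auto).
  apply (perp_approx_eigenvalue_of_family _ (Rabs r / 2)); [lra|]. intros eps Heps.
  set (eta := Rmin (Rabs r / 2) (eps * Rabs r / 4)).
  assert (He1 : eta <= Rabs r / 2) by apply Rmin_l.
  assert (He2 : eta <= eps * Rabs r / 4) by apply Rmin_r.
  assert (He3 : 0 < eta) by (apply Rmin_pos; [lra | apply Rdiv_lt_0_compat; [nra | lra]]).
  destruct (Ha eta He3) as [x [Hx1 Hx2]].
  destruct (HB x) as [Dv [Hv Hv2]]. set (v := B x) in *. set (e := sub_scal B r x) in *.
  exists v. split; [|split; [|split]]; auto.
  - pose proof (hnorm_sub_ge (hscal r x) (hopp e)) as H.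
    replace (hsub (hscal r x) (hopp e)) with v in H by (unfold e, v, sub_scal; hvec_eq).
    rewrite hnorm_scal, Hx1, hnorm_opp in H. lra.
  - assert (Hxphi : hinner x phi = - hinner e phi / r).
    { unfold e, sub_scal. rewrite hinner_sub_l, hinner_scal. fold v. rewrite Hv. field; auto. }
    assert (Hv3 : sub_scal L (nu + / r) v = hsub (hscal (hinner e phi / r) phi) (hscal (/ r) e)).
    { replace (sub_scal L (nu + / r) v) with (hsub (sub_scal L nu v) (hscal (/ r) v))
        by (unfold sub_scal; hvec_eq).
      rewrite Hv2. unfold Pproj. rewrite Hxphi.
      hvec_eq.
      assert (Hvz : hinner v z = hinner e z + r * hinner x z)
        by (unfold e, v, sub_scal; autorewrite with hinner_l; ring).
      rewrite Hvz. field. auto. }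
    rewrite Hv3. eapply Rle_lt_trans; [apply hnorm_sub|]. rewrite !hnorm_scal, phi_norm, Rmult_1_r.
    unfold Rdiv. rewrite Rabs_mult, !Rabs_inv.
    pose proof (cauchy_schwarz e phi) as Hcs. rewrite phi_norm, Rmult_1_r in Hcs.
    pose proof (Rinv_0_lt_compat _ Hra).
    assert (A1 : Rabs (hinner e phi) * / Rabs r <= hnorm e * / Rabs r) by (apply Rmult_le_compat_r; lra).
    assert (A2 : hnorm e * / Rabs r < eps / 4 * Rabs r * / Rabs r) by (apply Rmult_lt_compat_r; lra).
    replace (eps / 4 * Rabs r * / Rabs r) with (eps / 4) in A2 by (field; lra).
    lra.
Qed.

Lemma inverse_approx_eigenvalue_spectrum B nu r : perp_right_inverse B nu -> r <> 0 ->
  approx_eigenvalue B r -> in_spectrum D L (nu + / r) /\ nu + / r <> lam.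
Proof.
  intros HB Hr Ha. pose proof (inverse_approx_eigenvalue B nu r HB Hr Ha) as H. split.
  - now apply perp_approx_eigenvalue_spectrum.
  - intro E. rewrite E in H. exact (not_perp_approx_eigenvalue_lam H).
Qed.

Lemma resolvent_perp_right_inverse mu Rr C : resolvent mu Rr C -> mu <> lam ->
  linear_map (fun y => Rr (P y)) /\ symmetric (fun y => Rr (P y)) /\
  bounded_by (fun y => Rr (P y)) C /\ perp_right_inverse (fun y => Rr (P y)) mu.
Proof.
  intros HR Hm. pose proof (resolvent_bound_nonneg _ _ _ HR) as HC.
  assert (comm : forall y, Rr (P y) = P (Rr y)).
  { intro y. unfold Pproj. rewrite (linear_sub Rr _ _ (res_linear _ _ _ HR)).
    destruct (res_linear _ _ _ HR) as [_ R2].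
    rewrite R2, (resolvent_phi _ _ _ HR Hm), (resolvent_symmetric _ _ _ HR), (resolvent_phi _ _ _ HR Hm),
      hinner_scal_r. hvec_eq. }
  split; [|split; [|split]].
  - exact (linear_comp Rr P (res_linear _ _ _ HR) P_linear).
  - intros a b. rewrite (resolvent_symmetric _ _ _ HR), comm, P_symmetric, <- comm. reflexivity.
  - intro y. eapply Rle_trans; [apply (res_bounded _ _ _ HR)|]. apply Rmult_le_compat_l; auto.
    apply P_norm_le.
  - intro y. split; [|split]; [apply (res_dom _ _ _ HR) | | apply (res_right _ _ _ HR)].
    apply (resolvent_perp mu Rr C); auto. apply P_perp.
Qed.

(* Near [lam] the only spectrum of [L] is [lam], so the approximate eigenvalues [r] of [R(nu) P]
   satisfy [|nu + 1/r - lam| >= e0]. *)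
Lemma resolvent_proj_bounded e0 nu Rr C :
  (forall mu, mu <> lam -> Rabs (mu - lam) < e0 -> in_resolvent D L mu) ->
  resolvent nu Rr C -> nu <> lam -> Rabs (nu - lam) < e0 ->
  bounded_by (fun y => Rr (P y)) (/ (e0 - Rabs (nu - lam))).
Proof.
  intros Hiso HR Hnu Hnear.
  destruct (resolvent_perp_right_inverse _ _ _ HR Hnu) as [TL [TS [TB Tinv]]].
  destruct (bounded_by_approx_eigenvalue _ C phi TL TS TB phi_norm) as [r [Hr HBr]].
  assert (HM0 : 0 < / (e0 - Rabs (nu - lam))) by (apply Rinv_0_lt_compat; lra).
  intro v. eapply Rle_trans; [apply HBr|]. apply Rmult_le_compat_r; [apply hnorm_ge0|].
  destruct (Req_dec r 0) as [->|Hr0]; [rewrite Rabs_R0; lra|].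
  destruct (inverse_approx_eigenvalue_spectrum _ nu r Tinv Hr0 Hr) as [Hsp Hne].
  apply Rnot_lt_le. intro Hlt. apply Hsp, Hiso; auto.
  replace (nu + / r - lam) with ((nu - lam) + / r) by ring.
  eapply Rle_lt_trans; [apply Rabs_triang|]. rewrite Rabs_inv.
  assert (/ Rabs r < / / (e0 - Rabs (nu - lam))) by (apply Rinv_lt_contravar; [apply Rmult_lt_0_compat|]; lra).
  rewrite Rinv_inv in H. lra.
Qed.

(* Solve [(L - lam) x = y] on [phi]'s orthogonal as the fixed point of the contraction
   [x |-> R(nu) (y + (lam - nu) x)], [nu = lam + e0/3]. *)
Lemma L_lam_onto_perp y : hinner y phi = 0 ->
  exists x, D x /\ hinner x phi = 0 /\ sub_scal L lam x = y.
Proof.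
  intros Hy. destruct L_isolated as [e0 [He0 Hiso]].
  set (nu := lam + e0 / 3).
  assert (Hdist : Rabs (nu - lam) = e0 / 3) by (unfold nu; replace (lam + e0 / 3 - lam) with (e0 / 3) by ring;
    apply Rabs_pos_eq; lra).
  assert (Hnu : nu <> lam) by (unfold nu; lra).
  destruct (resolvent_of_in_resolvent nu) as [Rr [C HR]]; [apply Hiso; auto; lra|].
  pose proof (resolvent_proj_bounded e0 nu Rr C Hiso HR Hnu ltac:(lra)) as TM. rewrite Hdist in TM.
  set (Phi := fun x => Rr (hadd y (hscal (lam - nu) x))).
  assert (Hq : Rabs (lam - nu) * / (e0 - e0 / 3) = 1 / 2).
  { rewrite Rabs_minus_sym, Hdist. field. lra. }
  destruct (contraction_fixpoint (fun x => hinner x phi = 0) Phi (1 / 2) hzero (closed_hinner_eq phi 0))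
    as [x [Hx1 Hx2]].
  - apply hinner_zero_l.
  - intros x Hx. unfold Phi. apply (resolvent_perp nu Rr C); auto. autorewrite with hinner_l.
    rewrite Hx, Hy. ring.
  - lra.
  - intros a b Ha Hb. unfold Phi. rewrite <- (linear_sub Rr _ _ (res_linear _ _ _ HR)).
    replace (hsub (hadd y (hscal (lam - nu) a)) (hadd y (hscal (lam - nu) b)))
      with (hscal (lam - nu) (hsub a b)) by hvec_eq.
    rewrite <- (P_id (hscal (lam - nu) (hsub a b))) by (autorewrite with hinner_l; rewrite Ha, Hb; ring).
    eapply Rle_trans; [apply TM|]. rewrite hnorm_scal, <- Hq. lra.
  - assert (Dx : D x) by (rewrite <- Hx2; apply (res_dom _ _ _ HR)).
    exists x. split; [|split]; auto.
    replace (sub_scal L lam x) with (hsub (sub_scal L nu x) (hscal (lam - nu) x)) by (unfold sub_scal; hvec_eq).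
    rewrite <- Hx2 at 1. unfold Phi. rewrite (res_right _ _ _ HR). hvec_eq.
Qed.

Lemma sub_scal_L_0 x : sub_scal L 0 x = L x. Proof. unfold sub_scal. hvec_eq. Qed.

Lemma L_perp_bijective : (lam <> 0 -> in_resolvent D L 0) ->
  (forall y, hinner y phi = 0 -> exists x, D x /\ hinner x phi = 0 /\ L x = y) /\
  exists c, 0 < c /\ forall x, D x -> hinner x phi = 0 -> c * hnorm x <= hnorm (L x).
Proof.
  intros H0. destruct (Req_dec lam 0) as [Z|Z].
  - split.
    + intros y Hy. destruct (L_lam_onto_perp y Hy) as [x [? [? Hx]]].
      rewrite Z, sub_scal_L_0 in Hx. eauto.
    + destruct L_lam_bounded_below_perp as [c [Hc Hg]]. exists c. split; auto.
      intros x Dx Hx. rewrite <- sub_scal_L_0, <- Z. auto.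
  - destruct (resolvent_of_in_resolvent 0 (H0 Z)) as [Rr [C HR]].
    pose proof (resolvent_bound_nonneg _ _ _ HR). split.
    + intros y Hy. exists (Rr y). split; [|split]; [apply (res_dom _ _ _ HR) | |].
      * apply (resolvent_perp 0 Rr C); auto.
      * rewrite <- sub_scal_L_0. apply (res_right _ _ _ HR).
    + exists (/ (C + 1)). split; [apply Rinv_0_lt_compat; lra|]. intros x Dx Hx.
      pose proof (resolvent_lower_bound _ _ _ x HR Dx) as B. rewrite sub_scal_L_0 in B.
      apply (Rmult_le_reg_l (C + 1)); [lra|]. rewrite <- Rmult_assoc, Rinv_r by lra.
      pose proof (hnorm_ge0 (L x)). nra.
Qed.

Lemma L_perp_inverse : (lam <> 0 -> in_resolvent D L 0) ->
  exists G c, 0 < c /\ linear_map G /\ symmetric G /\ bounded_by G (/ c) /\ perp_right_inverse G 0 /\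
    forall x, D x -> hinner x phi = 0 -> G (L x) = x.
Proof.
  intro H0. destruct (L_perp_bijective H0) as [Hsurj [c [Hc Hbb]]].
  assert (Huniq : forall a b, D a -> D b -> hinner a phi = 0 -> hinner b phi = 0 -> L a = L b -> a = b).
  { intros a b Da Db Ha Hb E. apply hnorm_sub_eq0.
    pose proof (Hbb (hsub a b) (dom_sub _ _ Da Db) ltac:(rewrite hinner_sub_l, Ha, Hb; ring)) as H.
    rewrite L_sub, E, hsub_diag, hnorm_zero in H by auto. pose proof (hnorm_ge0 (hsub a b)).
    apply Rle_antisym; auto. apply (Rmult_le_reg_l c); lra. }
  set (G := fun y => epsilon (inhabits hzero) (fun x => D x /\ hinner x phi = 0 /\ L x = P y)).
  assert (HG : forall y, D (G y) /\ hinner (G y) phi = 0 /\ L (G y) = P y).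
  { intro y. apply (epsilon_spec (inhabits hzero) (fun x => D x /\ hinner x phi = 0 /\ L x = P y)).
    apply Hsurj, P_perp. }
  assert (Gleft : forall x, D x -> hinner x phi = 0 -> G (L x) = x).
  { intros x Dx Hx. destruct (HG (L x)) as [A1 [A2 A3]]. apply Huniq; auto.
    rewrite A3. apply P_id, L_perp; auto. }
  exists G, c. split; [|split; [|split; [|split; [|split]]]]; auto.
  - destruct P_linear as [P1 P2]. split.
    + intros a b. destruct (HG a) as [A1 [A2 A3]]. destruct (HG b) as [B1 [B2 B3]].
      destruct (HG (hadd a b)) as [C1 [C2 C3]].
      apply Huniq; auto using dom_add; [rewrite hinner_add, A2, B2; ring|].
      now rewrite C3, L_add, A3, B3, P1.
    + intros s a. destruct (HG a) as [A1 [A2 A3]]. destruct (HG (hscal s a)) as [C1 [C2 C3]].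
      apply Huniq; auto using dom_scal; [rewrite hinner_scal, A2; ring|].
      now rewrite C3, L_scal, A3, P2.
  - intros a b. destruct (HG a) as [A1 [A2 A3]]. destruct (HG b) as [B1 [B2 B3]].
    assert (E1 : hinner (G a) b = hinner (G a) (P b)).
    { unfold Pproj. rewrite hinner_sub_r, hinner_scal_r, A2. ring. }
    rewrite E1, <- B3, <- L_sym, A3 by auto. unfold Pproj.
    rewrite hinner_sub_l, hinner_scal, (hinner_sym Y phi (G b)), B2. ring.
  - intro y. destruct (HG y) as [A1 [A2 A3]]. pose proof (Hbb _ A1 A2) as H. rewrite A3 in H.
    pose proof (P_norm_le y). apply (Rmult_le_reg_l c); auto. rewrite <- Rmult_assoc, Rinv_r by lra. lra.
  - intro y. destruct (HG y) as [A1 [A2 A3]]. rewrite sub_scal_L_0. auto.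
Qed.

(* [G = L^{-1}] on [phi]'s orthogonal has norm [|r|] for an approximate eigenvalue [r], and [1/r]
   lies in the spectrum of [L] but differs from [lam], hence lies outside [[-n, n]]. *)
Lemma L_perp_inverse_gap n : 0 <= n ->
  (forall mu, - n <= mu <= n -> in_spectrum D L mu -> mu = lam) ->
  exists G d, n < d /\ linear_map G /\ bounded_by G (/ d) /\
    (forall y, D (G y) /\ hinner (G y) phi = 0 /\ L (G y) = P y) /\
    (forall x, D x -> hinner x phi = 0 -> d * hnorm x <= hnorm (L x)).
Proof.
  intros Hn Hspec.
  assert (H0 : lam <> 0 -> in_resolvent D L 0).
  { intros Z. apply NNPP. intro Hc. apply Z. symmetry. apply Hspec; [lra | exact Hc]. }
  destruct (L_perp_inverse H0) as [G [c [Hc [GL [GS [GB [Ginv Gleft]]]]]]].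
  destruct (bounded_by_approx_eigenvalue G _ phi GL GS GB phi_norm) as [r [Hr HBr]].
  assert (Hnr : n * Rabs r < 1).
  { destruct (Req_dec r 0) as [->|Hr0]; [rewrite Rabs_R0; lra|].
    destruct (inverse_approx_eigenvalue_spectrum G 0 r Ginv Hr0 Hr) as [Hsp Hne].
    rewrite Rplus_0_l in Hsp, Hne.
    assert (Hout : ~ (- n <= / r <= n)) by (intro Hin; apply Hne, Hspec; auto).
    assert (n < Rabs (/ r)) by (apply Rnot_le_lt; intro; apply Hout, Rabs_le_between; auto).
    rewrite Rabs_inv in H. pose proof (Rabs_pos_lt r Hr0).
    apply (Rmult_lt_compat_r (Rabs r)) in H; auto. rewrite Rinv_l in H by lra. lra. }
  set (M := Rabs r + (1 - n * Rabs r) / (n + 1)).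
  assert (HM : 0 < M) by (unfold M; pose proof (Rabs_pos r);
    assert (0 < (1 - n * Rabs r) / (n + 1)) by (apply Rdiv_lt_0_compat; lra); lra).
  assert (HnM : n * M < 1).
  { unfold M. assert (n * ((1 - n * Rabs r) / (n + 1)) < 1 - n * Rabs r); [|lra].
    replace (n * ((1 - n * Rabs r) / (n + 1))) with ((1 - n * Rabs r) * (n / (n + 1))) by (field; lra).
    rewrite <- (Rmult_1_r (1 - n * Rabs r)) at 2. apply Rmult_lt_compat_l; [lra|].
    apply (Rmult_lt_reg_r (n + 1)); [lra|]. unfold Rdiv. rewrite Rmult_assoc, Rinv_l by lra. lra. }
  assert (GM : bounded_by G M).
  { intro y. eapply Rle_trans; [apply HBr|]. apply Rmult_le_compat_r; [apply hnorm_ge0|].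
    unfold M. assert (0 < (1 - n * Rabs r) / (n + 1)) by (apply Rdiv_lt_0_compat; lra). lra. }
  exists G, (/ M). split; [|split; [|split; [|split]]]; auto.
  - apply (Rmult_lt_reg_r M); auto. rewrite Rinv_l by lra. lra.
  - now rewrite Rinv_inv.
  - intro y. destruct (Ginv y) as [A1 [A2 A3]]. rewrite sub_scal_L_0 in A3. auto.
  - intros x Dx Hx. pose proof (GM (L x)) as H. rewrite Gleft in H by auto.
    apply (Rmult_le_reg_l M); auto. rewrite <- Rmult_assoc, Rinv_r by lra. lra.
Qed.

(** * Fibers of [F] *)

Variable N : Y -> Y.
Variable n : R.
Variable DF : Y -> Y -> Y.
Hypothesis N_hypH : hypH D L N phi lam n.
Hypothesis F_C1 : is_C1 D L (Fmap L N) DF.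

Lemma n_nonneg : 0 <= n. Proof. now destruct N_hypH. Qed.

Lemma PN_lipschitz t w1 w2 : hinner w1 phi = 0 -> hinner w2 phi = 0 ->
  hnorm (hsub (P (N (shift phi t w1))) (P (N (shift phi t w2)))) <= n * hnorm (hsub w1 w2).
Proof. destruct N_hypH as [_ [H _]]. apply H. Qed.

Lemma L_perp_inverse_hypH : exists G d, n < d /\ linear_map G /\ bounded_by G (/ d) /\
  (forall y, D (G y) /\ hinner (G y) phi = 0 /\ L (G y) = P y) /\
  (forall x, D x -> hinner x phi = 0 -> d * hnorm x <= hnorm (L x)).
Proof. destruct N_hypH as [Hn [_ [_ Hs]]]. now apply L_perp_inverse_gap. Qed.

Lemma shift_dom t w : D w -> D (shift phi t w).
Proof. intro. unfold shift. auto using dom_add, dom_scal, phi_dom. Qed.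

Lemma PF_shift t w : D w -> hinner w phi = 0 ->
  P (Fmap L N (shift phi t w)) = hsub (L w) (P (N (shift phi t w))).
Proof.
  intros Dw Hw. unfold Fmap, shift. rewrite L_add, L_scal, L_phi by auto using dom_scal, phi_dom.
  rewrite (linear_sub P _ _ P_linear). destruct P_linear as [P1 P2].
  rewrite P1, !P2, P_phi, (P_id (L w)) by (now apply L_perp). hvec_eq.
Qed.

Lemma L_sub_le_PF_sub t a b : D a -> D b -> hinner a phi = 0 -> hinner b phi = 0 ->
  hnorm (L (hsub a b)) <=
    hnorm (hsub (P (Fmap L N (shift phi t a))) (P (Fmap L N (shift phi t b)))) + n * hnorm (hsub a b).
Proof.
  intros Da Db Ha Hb. rewrite !PF_shift, L_sub by auto.
  set (Na := P (N (shift phi t a))). set (Nb := P (N (shift phi t b))).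
  replace (hsub (L a) (L b)) with (hadd (hsub (hsub (L a) Na) (hsub (L b) Nb)) (hsub Na Nb)) by hvec_eq.
  eapply Rle_trans; [apply hnorm_add|]. pose proof (PN_lipschitz t a b Ha Hb). fold Na Nb in H. lra.
Qed.

Definition fiber_point z t w : Prop :=
  D w /\ hinner w phi = 0 /\ P (Fmap L N (shift phi t w)) = z.

(* [w = G (z + P N(w + t phi))] is a contraction with constant [n / d < 1]. *)
Lemma fiber_point_exists z t : hinner z phi = 0 -> exists w, fiber_point z t w.
Proof.
  intro Hz. destruct L_perp_inverse_hypH as [G [d [Hd [GL [GB [Ginv _]]]]]].
  pose proof n_nonneg as Hn.
  set (Phi := fun w => G (hadd z (P (N (shift phi t w))))).
  destruct (contraction_fixpoint (fun x => hinner x phi = 0) Phi (n / d) hzero (closed_hinner_eq phi 0))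
    as [w [Hw1 Hw2]].
  - apply hinner_zero_l.
  - intros x Hx. apply Ginv.
  - split; [apply Rmult_le_pos; [|apply Rlt_le, Rinv_0_lt_compat]; lra|].
    apply (Rmult_lt_reg_r d); [lra|]. unfold Rdiv. rewrite Rmult_assoc, Rinv_l by lra. lra.
  - intros a b Ha Hb. unfold Phi. rewrite <- (linear_sub G _ _ GL).
    eapply Rle_trans; [apply GB|].
    replace (hsub (hadd z (P (N (shift phi t a)))) (hadd z (P (N (shift phi t b)))))
      with (hsub (P (N (shift phi t a))) (P (N (shift phi t b)))) by hvec_eq.
    pose proof (PN_lipschitz t a b Ha Hb). pose proof (Rinv_0_lt_compat d ltac:(lra)).
    unfold Rdiv. rewrite (Rmult_comm n), Rmult_assoc. apply Rmult_le_compat_l; lra.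
  - exists w. destruct (Ginv (hadd z (P (N (shift phi t w))))) as [A1 [A2 A3]].
    fold (Phi w) in A1, A2, A3. rewrite Hw2 in A1, A2, A3. split; [|split]; auto.
    rewrite PF_shift, A3, P_id by (auto; rewrite hinner_add, Hz, P_perp; ring). hvec_eq.
Qed.

Lemma fiber_w_point z t : hinner z phi = 0 -> fiber_point z t (fiber_w D L N phi z t).
Proof.
  intro Hz. exact (epsilon_spec (inhabits hzero)
    (fun w => D w /\ HY phi w /\ P (Fmap L N (shift phi t w)) = z) (fiber_point_exists z t Hz)).
Qed.

Notation gn := (gnorm L).

Lemma gnorm_ge0 h : 0 <= gn h. Proof. apply sqrt_pos. Qed.
Lemma hnorm_le_gnorm h : hnorm h <= gn h.
Proof. apply sqrt_le_1_alt. pose proof (hinner_pos Y (L h)). lra. Qed.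
Lemma hnorm_L_le_gnorm h : hnorm (L h) <= gn h.
Proof. apply sqrt_le_1_alt. pose proof (hinner_pos Y h). lra. Qed.
Lemma gnorm_le h : gn h <= hnorm h + hnorm (L h).
Proof.
  pose proof (hnorm_ge0 h); pose proof (hnorm_ge0 (L h)).
  unfold gnorm. rewrite <- (sqrt_Rsqr (hnorm h + hnorm (L h))) by lra.
  apply sqrt_le_1_alt. unfold Rsqr. rewrite <- (hnorm_sq h), <- (hnorm_sq (L h)). nra.
Qed.
Lemma gnorm_scal a h : D h -> gn (hscal a h) = Rabs a * gn h.
Proof.
  intro Dh. unfold gnorm. rewrite L_scal, !hinner_scal, !hinner_scal_r by auto.
  replace (a * (a * hinner h h) + a * (a * hinner (L h) (L h)))
    with (Rsqr a * (hinner h h + hinner (L h) (L h))) by (unfold Rsqr; ring).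
  rewrite sqrt_mult_alt by apply Rle_0_sqr. now rewrite sqrt_Rsqr_abs.
Qed.
Lemma gnorm_add_le a b : D a -> D b -> gn (hadd a b) <= 2 * (gn a + gn b).
Proof.
  intros Da Db. eapply Rle_trans; [apply gnorm_le|]. rewrite L_add by auto.
  pose proof (hnorm_add a b). pose proof (hnorm_add (L a) (L b)).
  pose proof (hnorm_le_gnorm a). pose proof (hnorm_le_gnorm b).
  pose proof (hnorm_L_le_gnorm a). pose proof (hnorm_L_le_gnorm b). lra.
Qed.
Lemma gnorm_eq0 h : gn h <= 0 -> h = hzero.
Proof. intro. apply hnorm_eq0. pose proof (hnorm_le_gnorm h). pose proof (hnorm_ge0 h). lra. Qed.

Lemma DF_add u a b : D u -> D a -> D b -> DF u (hadd a b) = hadd (DF u a) (DF u b).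
Proof. intros Du. destruct F_C1 as [H _]. now apply H. Qed.
Lemma DF_scal u a h : D u -> D h -> DF u (hscal a h) = hscal a (DF u h).
Proof. intros Du. destruct F_C1 as [H _]. now apply H. Qed.
Lemma DF_sub u a b : D u -> D a -> D b -> DF u (hsub a b) = hsub (DF u a) (DF u b).
Proof. intros. unfold hsub. rewrite !hopp_scal, DF_add, DF_scal; auto using dom_scal. Qed.
Lemma DF_zero u : D u -> DF u hzero = hzero.
Proof. intro Du. rewrite <- (hscal0 hzero), DF_scal by auto using dom_zero. now rewrite !hscal0. Qed.
Lemma DF_bounded u : D u -> exists C, 0 <= C /\ forall h, D h -> hnorm (DF u h) <= C * gn h.
Proof.
  intro Du. destruct F_C1 as [H _]. destruct (H u Du) as [_ [C HC]]. exists (Rabs C).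
  split; [apply Rabs_pos|]. intros h Dh. eapply Rle_trans; [now apply HC|].
  apply Rmult_le_compat_r; [apply gnorm_ge0 | apply Rle_abs].
Qed.
Lemma DF_remainder u : D u -> forall eps, eps > 0 -> exists delta, delta > 0 /\
  forall h, D h -> gn h < delta ->
    hnorm (hsub (hsub (Fmap L N (hadd u h)) (Fmap L N u)) (DF u h)) <= eps * gn h.
Proof. destruct F_C1 as [_ [H _]]. apply H. Qed.

Lemma F_increment_le u : D u -> exists delta, delta > 0 /\ forall h, D h -> gn h < delta ->
  hnorm (hsub (Fmap L N (hadd u h)) (Fmap L N u)) <= hnorm (DF u h) + gn h.
Proof.
  intro Du. destruct (DF_remainder u Du 1 ltac:(lra)) as [delta [Hdel Hrem]].
  exists delta. split; auto. intros h Dh Hh. specialize (Hrem h Dh Hh).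
  replace (hsub (Fmap L N (hadd u h)) (Fmap L N u))
    with (hadd (hsub (hsub (Fmap L N (hadd u h)) (Fmap L N u)) (DF u h)) (DF u h)) by hvec_eq.
  eapply Rle_trans; [apply hnorm_add|]. lra.
Qed.

(** * Linearisation at a fiber point *)

Section AtFiberPoint.
Variables (t0 : R) (w0 : Y).
Hypothesis w0_dom : D w0.
Hypothesis w0_perp : hinner w0 phi = 0.
Let u0 := shift phi t0 w0.

Lemma u0_dom : D u0. Proof. now apply shift_dom. Qed.

(* [P DN(u0) h], written through [F = L - N] since [N] itself is not assumed differentiable. *)
Definition PDN (h : Y) : Y := hsub (L h) (P (DF u0 h)).

Lemma PDN_sub a b : D a -> D b -> PDN (hsub a b) = hsub (PDN a) (PDN b).
Proof.
  intros Da Db. unfold PDN. rewrite L_sub, DF_sub, (linear_sub P _ _ P_linear) by auto using u0_dom.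
  hvec_eq.
Qed.

Lemma PDN_perp h : D h -> hinner h phi = 0 -> hinner (PDN h) phi = 0.
Proof. intros Dh Hh. unfold PDN. rewrite hinner_sub_l, P_perp, L_perp by auto. ring. Qed.

(* The difference quotients of [PN_t] along [h] are bounded by [n |h|]; so is their limit. *)
Lemma PDN_lipschitz h : D h -> hinner h phi = 0 -> hnorm (PDN h) <= n * hnorm h.
Proof.
  intros Dh Hh. apply Rnot_lt_le. intro Hc. set (b := PDN h) in *.
  pose proof (gnorm_ge0 h) as Hg0.
  set (eta := (hnorm b - n * hnorm h) / (2 * (gn h + 1))).
  assert (Heta : eta > 0) by (unfold eta; apply Rdiv_lt_0_compat; lra).
  destruct (DF_remainder u0 u0_dom eta Heta) as [delta [Hdel Hrem]].
  set (s := delta / (2 * (gn h + 1))).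
  assert (Hs : 0 < s) by (unfold s; apply Rdiv_lt_0_compat; lra).
  assert (Dsh : D (hscal s h)) by (now apply dom_scal).
  assert (Hgs : gn (hscal s h) < delta).
  { rewrite gnorm_scal, Rabs_pos_eq by (auto; lra). unfold s.
    apply (Rmult_lt_reg_r (2 * (gn h + 1))); [lra|].
    replace (delta / (2 * (gn h + 1)) * gn h * (2 * (gn h + 1))) with (delta * gn h) by (field; lra). nra. }
  specialize (Hrem _ Dsh Hgs). rewrite gnorm_scal, Rabs_pos_eq in Hrem by (auto; lra).
  set (rem := hsub (hsub (Fmap L N (hadd u0 (hscal s h))) (Fmap L N u0)) (DF u0 (hscal s h))) in *.
  assert (Esh : hadd u0 (hscal s h) = shift phi t0 (hadd w0 (hscal s h))) by (unfold u0, shift; hvec_eq).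
  pose proof (PN_lipschitz t0 (hadd w0 (hscal s h)) w0
                ltac:(rewrite hinner_add, hinner_scal, w0_perp, Hh; ring) w0_perp) as Hlip.
  rewrite <- Esh in Hlip. fold u0 in Hlip.
  replace (hsub (hadd w0 (hscal s h)) w0) with (hscal s h) in Hlip by hvec_eq.
  rewrite hnorm_scal, Rabs_pos_eq in Hlip by lra.
  assert (Eb : hscal s b = hadd (P rem) (hsub (P (N (hadd u0 (hscal s h)))) (P (N u0)))).
  { unfold b, PDN, rem, Fmap. rewrite L_add, L_scal, DF_scal by auto using u0_dom.
    destruct P_linear as [P1 P2]. rewrite !(linear_sub P _ _ P_linear), !P1, !P2.
    rewrite (P_id (L h)) by (now apply L_perp). hvec_eq. }
  assert (B1 : s * hnorm b <= eta * (s * gn h) + n * (s * hnorm h)).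
  { rewrite <- (Rabs_pos_eq s) at 1 by lra. rewrite <- hnorm_scal, Eb.
    eapply Rle_trans; [apply hnorm_add|]. pose proof (P_norm_le rem). lra. }
  assert (B2 : hnorm b <= eta * gn h + n * hnorm h) by (apply (Rmult_le_reg_l s); auto; lra).
  assert (B3 : eta * gn h <= (hnorm b - n * hnorm h) / 2).
  { unfold eta, Rdiv. rewrite Rinv_mult.
    replace ((hnorm b - n * hnorm h) * (/ 2 * / (gn h + 1)) * gn h) with
      ((hnorm b - n * hnorm h) * / 2 * (gn h / (gn h + 1))) by (field; lra).
    rewrite <- (Rmult_1_r ((hnorm b - n * hnorm h) * / 2)) at 2.
    apply Rmult_le_compat_l; [lra|]. apply (Rmult_le_reg_r (gn h + 1)); [lra|]. unfold Rdiv.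
    rewrite Rmult_assoc, Rinv_l by lra. lra. }
  lra.
Qed.

Lemma PDF_bounded_below : exists Cg, 0 < Cg /\
  forall h, D h -> hinner h phi = 0 -> gn h <= Cg * hnorm (P (DF u0 h)).
Proof.
  destruct L_perp_inverse_hypH as [G [d [Hd [_ [_ [_ Hbb]]]]]]. pose proof n_nonneg as Hn.
  exists (2 / (d - n) * (1 + n) + 1). split.
  { assert (0 < 2 / (d - n) * (1 + n)) by (apply Rmult_lt_0_compat; [apply Rdiv_lt_0_compat|]; lra). lra. }
  intros h Dh Hh.
  replace (P (DF u0 h)) with (hsub (L h) (PDN h)) by (unfold PDN; hvec_eq).
  pose proof (PDN_lipschitz h Dh Hh). pose proof (Hbb h Dh Hh).
  pose proof (hnorm_sub_ge (L h) (PDN h)). pose proof (gnorm_le h).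
  set (a := hnorm (hsub (L h) (PDN h))) in *.
  assert (Ha0 : 0 <= a) by apply hnorm_ge0.
  assert (H5 : hnorm h <= a / (d - n)).
  { apply (Rmult_le_reg_l (d - n)); [lra|]. replace ((d - n) * (a / (d - n))) with a by (field; lra). lra. }
  assert (H7 : n * hnorm h <= n * (a / (d - n))) by (apply Rmult_le_compat_l; auto).
  assert (0 <= a / (d - n)) by (apply Rmult_le_pos; auto; apply Rlt_le, Rinv_0_lt_compat; lra).
  replace ((2 / (d - n) * (1 + n) + 1) * a) with (2 * (a / (d - n)) + 2 * n * (a / (d - n)) + a)
    by (field; lra).
  nra.
Qed.

(* [P DF(u0) h = y] is [h = G (y + PDN h)] on [phi]'s orthogonal, a contraction. *)
Lemma PDF_onto_perp y : hinner y phi = 0 -> exists h, D h /\ hinner h phi = 0 /\ P (DF u0 h) = y.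
Proof.
  intro Hy. destruct L_perp_inverse_hypH as [G [d [Hd [GL [GB [Ginv _]]]]]]. pose proof n_nonneg as Hn.
  set (Psi := fun k => hadd y (PDN (G k))).
  destruct (contraction_fixpoint (fun x => hinner x phi = 0) Psi (n / d) hzero (closed_hinner_eq phi 0))
    as [k [Hk1 Hk2]].
  - apply hinner_zero_l.
  - intros x Hx. unfold Psi. destruct (Ginv x) as [A1 [A2 _]]. rewrite hinner_add, Hy, PDN_perp; auto. ring.
  - split; [apply Rmult_le_pos; [|apply Rlt_le, Rinv_0_lt_compat]; lra|].
    apply (Rmult_lt_reg_r d); [lra|]. unfold Rdiv. rewrite Rmult_assoc, Rinv_l by lra. lra.
  - intros a b Ha Hb. unfold Psi.
    replace (hsub (hadd y (PDN (G a))) (hadd y (PDN (G b)))) with (hsub (PDN (G a)) (PDN (G b))) by hvec_eq.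
    destruct (Ginv a) as [A1 _]. destruct (Ginv b) as [B1 _].
    rewrite <- PDN_sub, <- (linear_sub G _ _ GL) by auto.
    destruct (Ginv (hsub a b)) as [C1 [C2 _]].
    eapply Rle_trans; [apply PDN_lipschitz; auto|]. pose proof (GB (hsub a b)).
    replace (n / d * hnorm (hsub a b)) with (n * (/ d * hnorm (hsub a b))) by (field; lra).
    apply Rmult_le_compat_l; auto.
  - destruct (Ginv k) as [A1 [A2 A3]]. exists (G k). split; [|split]; auto.
    replace (P (DF u0 (G k))) with (hsub (L (G k)) (PDN (G k))) by (unfold PDN; hvec_eq).
    rewrite A3, P_id by auto. rewrite <- Hk2 at 1. unfold Psi. hvec_eq.
Qed.

Lemma fiber_tangent_exists : exists v0, D v0 /\ hinner v0 phi = 1 /\ P (DF u0 v0) = hzero.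
Proof.
  destruct (PDF_onto_perp (hopp (P (DF u0 phi)))) as [w [Dw [Hw Ew]]].
  { rewrite hinner_opp_l, P_perp. ring. }
  exists (hadd w phi). split; [|split].
  - auto using dom_add, phi_dom.
  - rewrite hinner_add, Hw, phi_inner. ring.
  - destruct P_linear as [P1 _]. rewrite DF_add, P1, Ew by auto using u0_dom, phi_dom. hvec_eq.
Qed.

Section Tangent.
Variable v0 : Y.
Hypothesis v0_dom : D v0.
Hypothesis v0_phi : hinner v0 phi = 1.
Hypothesis v0_tangent : P (DF u0 v0) = hzero.
Let c := hinner (DF u0 v0) phi.

Lemma DF_tangent : DF u0 v0 = hscal c phi.
Proof. unfold c. rewrite (P_decompose (DF u0 v0)) at 1. rewrite v0_tangent. hvec_eq. Qed.

Lemma DF_not_invertible : c = 0 -> ~ invertible_op D L (DF u0).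
Proof.
  intros Hc [G [_ [Gleft _]]].
  assert (E : DF u0 v0 = DF u0 hzero) by (rewrite DF_tangent, DF_zero, Hc by apply u0_dom; apply hscal0).
  pose proof (Gleft v0 v0_dom) as H1. pose proof (Gleft hzero dom_zero) as H2.
  rewrite E, H2 in H1. rewrite <- H1, hinner_zero_l in v0_phi. lra.
Qed.

(* A kernel vector [x] is split as [x' + <x, phi> v0] with [x'] orthogonal to [phi]; then
   [P DF(u0) x' = 0] kills [x'], and [c <> 0] kills [<x, phi>]. *)
Lemma DF_injective : c <> 0 -> forall x1 x2, D x1 -> D x2 -> DF u0 x1 = DF u0 x2 -> x1 = x2.
Proof.
  intros Hc x1 x2 D1 D2 E. destruct PDF_bounded_below as [Cg [HCg Hbb]].
  set (x := hsub x1 x2). assert (Dx : D x) by (now apply dom_sub).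
  assert (DFx : DF u0 x = hzero) by (unfold x; rewrite DF_sub, E by auto using u0_dom; apply hsub_diag).
  set (x' := hsub x (hscal (hinner x phi) v0)).
  assert (Dx' : D x') by (unfold x'; auto using dom_sub, dom_scal).
  assert (Hx' : hinner x' phi = 0) by (unfold x'; rewrite hinner_sub_l, hinner_scal, v0_phi; ring).
  assert (DFx' : DF u0 x' = hscal (- (hinner x phi * c)) phi).
  { unfold x'. rewrite DF_sub, DF_scal, DFx, DF_tangent by auto using u0_dom, dom_scal. hvec_eq. }
  assert (Ex' : x' = hzero).
  { apply gnorm_eq0. eapply Rle_trans; [apply Hbb; auto|]. rewrite DFx'.
    destruct P_linear as [_ P2]. rewrite P2, P_phi, hnorm_scal, hnorm_zero. lra. }
  assert (Hxc : hinner x phi * c = 0).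
  { rewrite Ex', DF_zero in DFx' by apply u0_dom.
    assert (G := f_equal (fun v => hinner v phi) DFx'). simpl in G.
    rewrite hinner_zero_l, hinner_scal, phi_inner in G. lra. }
  assert (Hx0 : hinner x phi = 0) by (apply Rmult_integral in Hxc as [?|?]; tauto).
  apply hsub_eq0. fold x. unfold x' in Ex'. rewrite Hx0 in Ex'. rewrite <- Ex'. hvec_eq.
Qed.

(* The inverse: solve [P DF(u0) h = P y] with [h] orthogonal to [phi], then correct along [v0]. *)
Lemma DF_invertible : c <> 0 -> invertible_op D L (DF u0).
Proof.
  intro Hc. destruct PDF_bounded_below as [Cg [HCg Hbb]].
  destruct (DF_bounded u0 u0_dom) as [CD [HCD HCD']].
  set (hy := fun y => epsilon (inhabits hzero) (fun h => D h /\ hinner h phi = 0 /\ P (DF u0 h) = P y)).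
  assert (Hhy : forall y, D (hy y) /\ hinner (hy y) phi = 0 /\ P (DF u0 (hy y)) = P y).
  { intro y. apply (epsilon_spec (inhabits hzero) (fun h => D h /\ hinner h phi = 0 /\ P (DF u0 h) = P y)).
    apply PDF_onto_perp, P_perp. }
  set (coef := fun y => (hinner y phi - hinner (DF u0 (hy y)) phi) / c).
  set (Gi := fun y => hadd (hy y) (hscal (coef y) v0)).
  assert (Gdom : forall y, D (Gi y)) by (intro y; destruct (Hhy y) as [A1 _]; unfold Gi; auto using dom_add, dom_scal).
  assert (Gright : forall y, DF u0 (Gi y) = y).
  { intro y. destruct (Hhy y) as [A1 [A2 A3]].
    unfold Gi. rewrite DF_add, DF_scal, DF_tangent by auto using u0_dom, dom_scal.
    rewrite (P_decompose (DF u0 (hy y))) at 1. rewrite A3. unfold Pproj, coef. hvec_eq. field. auto. }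
  exists Gi. split; [|split].
  - intro y. auto.
  - intros x Dx. apply DF_injective; auto.
  - assert (Hca : 0 < Rabs c) by (apply Rabs_pos_lt; auto).
    exists (2 * (Cg + (1 + CD * Cg) / Rabs c * gn v0)). intro y.
    destruct (Hhy y) as [A1 [A2 A3]].
    unfold Gi. eapply Rle_trans; [apply gnorm_add_le; auto using dom_scal|].
    rewrite gnorm_scal by auto.
    pose proof (Hbb (hy y) A1 A2) as B1. rewrite A3 in B1. pose proof (P_norm_le y).
    assert (B2 : gn (hy y) <= Cg * hnorm y) by (eapply Rle_trans; [apply B1|]; apply Rmult_le_compat_l; lra).
    assert (B3 : Rabs (hinner (DF u0 (hy y)) phi) <= CD * (Cg * hnorm y)).
    { eapply Rle_trans; [apply cauchy_schwarz|]. rewrite phi_norm, Rmult_1_r.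
      eapply Rle_trans; [apply HCD'; auto|]. apply Rmult_le_compat_l; auto. }
    assert (B4 : Rabs (hinner y phi) <= hnorm y)
      by (eapply Rle_trans; [apply cauchy_schwarz|]; rewrite phi_norm; lra).
    assert (B5 : Rabs (coef y) <= (1 + CD * Cg) / Rabs c * hnorm y).
    { unfold coef, Rdiv. rewrite Rabs_mult, Rabs_inv.
      replace ((1 + CD * Cg) * / Rabs c * hnorm y) with (((1 + CD * Cg) * hnorm y) * / Rabs c) by ring.
      apply Rmult_le_compat_r; [apply Rlt_le, Rinv_0_lt_compat; auto|].
      eapply Rle_trans; [apply Rabs_triang|]. rewrite Rabs_Ropp. lra. }
    pose proof (gnorm_ge0 v0). pose proof (hnorm_ge0 y).
    assert (Rabs (coef y) * gn v0 <= (1 + CD * Cg) / Rabs c * hnorm y * gn v0)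
      by (apply Rmult_le_compat_r; auto).
    nra.
Qed.

Lemma DF_invertible_iff : ~ invertible_op D L (DF u0) <-> c = 0.
Proof.
  split.
  - intro Hni. apply NNPP. intro Hc. exact (Hni (DF_invertible Hc)).
  - apply DF_not_invertible.
Qed.

End Tangent.
End AtFiberPoint.

Section AlongFiber.
Variable z0 : Y.
Hypothesis z0_perp : hinner z0 phi = 0.
Variable t0 : R.
Let W t := fiber_w D L N phi z0 t.
Let w0 := W t0.
Let u0 := shift phi t0 w0.
Let fiber_incr t := hadd (hsub (W t) w0) (hscal (t - t0) phi).

Lemma W_point t : fiber_point z0 t (W t). Proof. now apply fiber_w_point. Qed.
Lemma w0_dom : D w0. Proof. apply (W_point t0). Qed.
Lemma w0_perp : hinner w0 phi = 0. Proof. apply (W_point t0). Qed.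

Lemma fiber_u_incr t : fiber_u D L N phi z0 t = hadd u0 (fiber_incr t).
Proof. unfold fiber_u, u0, fiber_incr, shift. fold (W t). hvec_eq. Qed.

(* [L (w(t) - w0)] is controlled through [PF_t], and [PF_t w(t) = z0 = PF_t0 w0], while
   [|F(w0 + t phi) - F(w0 + t0 phi)| = O(t - t0)]. *)
Lemma fiber_w_lipschitz : exists K1 d1, 0 <= K1 /\ 0 < d1 /\
  forall t, Rabs (t - t0) < d1 -> gn (hsub (W t) w0) <= K1 * Rabs (t - t0).
Proof.
  destruct L_perp_inverse_hypH as [G [d [Hd [_ [_ [_ Hbb]]]]]]. pose proof n_nonneg as Hn.
  pose proof w0_dom as Db. pose proof w0_perp as Hb.
  assert (Du0 : D u0) by (now apply shift_dom).
  destruct (F_increment_le u0 Du0) as [delta [Hdel Hinc]].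
  pose proof (gnorm_ge0 phi) as Hgp.
  set (Kb := 1 + (1 + n) / (d - n)).
  assert (HKb : 0 < Kb) by (unfold Kb; assert (0 < (1 + n) / (d - n)) by (apply Rdiv_lt_0_compat; lra); lra).
  exists (Kb * (hnorm (DF u0 phi) + gn phi)), (delta / (gn phi + 1)).
  split; [apply Rmult_le_pos; [lra|]; pose proof (hnorm_ge0 (DF u0 phi)); lra|].
  split; [apply Rdiv_lt_0_compat; lra|].
  intros t Ht. set (Dl := t - t0) in *.
  destruct (W_point t) as [Da [Ha Ea]]. destruct (W_point t0) as [_ [_ Eb]]. fold w0 in Eb.
  pose proof (L_sub_le_PF_sub t (W t) w0 Da Db Ha Hb) as B. rewrite Ea in B.
  assert (Es : shift phi t w0 = hadd u0 (hscal Dl phi)) by (unfold u0, shift, Dl; hvec_eq).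
  rewrite Es in B.
  set (rho := hnorm (hsub (Fmap L N (hadd u0 (hscal Dl phi))) (Fmap L N u0))).
  assert (B1 : hnorm (hsub z0 (P (Fmap L N (hadd u0 (hscal Dl phi))))) <= rho).
  { rewrite <- Eb, <- (linear_sub P _ _ P_linear). eapply Rle_trans; [apply P_norm_le|].
    unfold rho, u0. rewrite hnorm_sub_sym. apply Rle_refl. }
  assert (B2 : rho <= Rabs Dl * (hnorm (DF u0 phi) + gn phi)).
  { assert (Hg : gn (hscal Dl phi) < delta).
    { rewrite gnorm_scal by apply phi_dom.
      apply Rle_lt_trans with (Rabs Dl * (gn phi + 1)); [pose proof (Rabs_pos Dl); nra|].
      apply (Rmult_lt_reg_r (/ (gn phi + 1))); [apply Rinv_0_lt_compat; lra|].
      rewrite Rmult_assoc, Rinv_r, Rmult_1_r by lra. exact Ht. }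
    eapply Rle_trans; [apply (Hinc _ (dom_scal _ _ phi_dom) Hg)|].
    rewrite DF_scal, hnorm_scal, gnorm_scal by auto using phi_dom. lra. }
  pose proof (Hbb (hsub (W t) w0) (dom_sub _ _ Da Db) ltac:(rewrite hinner_sub_l, Ha, Hb; ring)) as B3.
  assert (B4 : hnorm (hsub (W t) w0) <= rho / (d - n)).
  { apply (Rmult_le_reg_l (d - n)); [lra|]. replace ((d - n) * (rho / (d - n))) with rho by (field; lra). lra. }
  pose proof (gnorm_le (hsub (W t) w0)).
  assert (B5 : n * hnorm (hsub (W t) w0) <= n * (rho / (d - n))) by (apply Rmult_le_compat_l; auto).
  assert (B6 : gn (hsub (W t) w0) <= Kb * rho).
  { unfold Kb. replace ((1 + (1 + n) / (d - n)) * rho) with (rho + rho / (d - n) + n * (rho / (d - n)))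
      by (field; lra). lra. }
  eapply Rle_trans; [apply B6|]. rewrite Rmult_assoc. apply Rmult_le_compat_l; lra.
Qed.

Section Tangent.
Variable v0 : Y.
Hypothesis v0_dom : D v0.
Hypothesis v0_phi : hinner v0 phi = 1.
Hypothesis v0_tangent : P (DF u0 v0) = hzero.
Let c := hinner (DF u0 v0) phi.
Let rem v := hsub (hsub (Fmap L N (hadd u0 v)) (Fmap L N u0)) (DF u0 v).

(* [fiber_incr t - (t - t0) v0] is orthogonal to [phi] and [P DF(u0)] maps it to [- P rem]. *)
Lemma height_increment_bound : exists C, 0 <= C /\ forall t,
  Rabs (height L N phi (fiber_u D L N phi z0 t) - height L N phi (fiber_u D L N phi z0 t0)
        - (t - t0) * c) <= C * hnorm (rem (fiber_incr t)).
Proof.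
  pose proof w0_dom as Dw. pose proof w0_perp as Hw.
  assert (Du0 : D u0) by (now apply shift_dom).
  destruct (PDF_bounded_below t0 w0 Dw Hw) as [Cg [HCg Hbb]]. fold u0 in Hbb.
  destruct (DF_bounded u0 Du0) as [CD [HCD HCD']].
  exists (1 + CD * Cg). split; [nra|]. intro t.
  destruct (W_point t) as [Dt [Ht Et]]. destruct (W_point t0) as [_ [_ E0]]. fold w0 u0 in E0.
  set (v := fiber_incr t). set (r := rem v).
  assert (Dv : D v) by (unfold v, fiber_incr; auto using dom_add, dom_sub, dom_scal, phi_dom).
  set (e := hsub v (hscal (t - t0) v0)).
  assert (De : D e) by (unfold e; auto using dom_sub, dom_scal).
  assert (He : hinner e phi = 0).
  { unfold e, v, fiber_incr. autorewrite with hinner_l. rewrite Ht, Hw, v0_phi, phi_inner. ring. }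
  assert (Pe : P (DF u0 e) = hopp (P r)).
  { unfold e. rewrite DF_sub, DF_scal by auto using dom_scal. destruct P_linear as [_ P2].
    rewrite (linear_sub P _ _ P_linear), P2, v0_tangent.
    unfold r, rem, v. rewrite !(linear_sub P _ _ P_linear), <- fiber_u_incr. unfold fiber_u. fold (W t).
    rewrite Et, E0. hvec_eq. }
  assert (Hge : gn e <= Cg * hnorm r).
  { eapply Rle_trans; [apply Hbb; auto|]. rewrite Pe, hnorm_opp.
    apply Rmult_le_compat_l; [lra | apply P_norm_le]. }
  assert (Hdiff : height L N phi (fiber_u D L N phi z0 t) - height L N phi (fiber_u D L N phi z0 t0)
                  - (t - t0) * c = hinner r phi + hinner (DF u0 e) phi).
  { rewrite !fiber_u_incr. unfold height, c.
    replace (fiber_incr t0) with (@hzero Y) by (unfold fiber_incr, w0; rewrite Rminus_diag; hvec_eq).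
    replace (hadd u0 hzero) with u0 by hvec_eq. fold v.
    assert (EDv : DF u0 v = hadd (hscal (t - t0) (DF u0 v0)) (DF u0 e)).
    { replace v with (hadd (hscal (t - t0) v0) e) at 1 by (unfold e; hvec_eq).
      now rewrite DF_add, DF_scal by auto using dom_scal. }
    unfold r, rem. autorewrite with hinner_l. rewrite EDv. autorewrite with hinner_l. ring. }
  rewrite Hdiff. eapply Rle_trans; [apply Rabs_triang|].
  pose proof (cauchy_schwarz r phi). pose proof (cauchy_schwarz (DF u0 e) phi). rewrite phi_norm in *.
  pose proof (HCD' e De). pose proof (hnorm_ge0 r).
  assert (CD * gn e <= CD * (Cg * hnorm r)) by (apply Rmult_le_compat_l; auto). nra.
Qed.

Lemma height_fiber_derivative :
  derivable_pt_lim (fun t => height L N phi (fiber_u D L N phi z0 t)) t0 c.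
Proof.
  assert (Du0 : D u0) by (apply shift_dom, w0_dom).
  destruct height_increment_bound as [C [HC Hinc]].
  destruct fiber_w_lipschitz as [K1 [d1 [HK1 [Hd1 Hlip]]]].
  set (K2 := 2 * (K1 + gn phi)). assert (HK2 : 0 <= K2) by (unfold K2; pose proof (gnorm_ge0 phi); lra).
  apply derivable_pt_lim_of_remainder. intros eps Heps.
  set (eta := eps / ((C + 1) * (K2 + 1))).
  assert (Heta : eta > 0) by (unfold eta; apply Rdiv_lt_0_compat; auto; nra).
  destruct (DF_remainder u0 Du0 eta Heta) as [delta [Hdel Hrem]].
  exists (Rmin d1 (delta / (K2 + 1))).
  split; [apply Rmin_pos; auto; apply Rdiv_lt_0_compat; lra|]. intros Dl HDl0 HDl.
  assert (HDl1 : Rabs Dl < d1) by (eapply Rlt_le_trans; [apply HDl | apply Rmin_l]).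
  assert (HDl2 : Rabs Dl < delta / (K2 + 1)) by (eapply Rlt_le_trans; [apply HDl | apply Rmin_r]).
  set (t := t0 + Dl). assert (Htt : t - t0 = Dl) by (unfold t; ring).
  destruct (W_point t) as [Dt _].
  assert (Dv : D (fiber_incr t)) by (unfold fiber_incr; auto using dom_add, dom_sub, dom_scal, w0_dom, phi_dom).
  assert (Hgv : gn (fiber_incr t) <= K2 * Rabs Dl).
  { specialize (Hlip t ltac:(rewrite Htt; exact HDl1)). rewrite Htt in Hlip.
    unfold fiber_incr. rewrite Htt.
    eapply Rle_trans; [apply gnorm_add_le; auto using dom_sub, dom_scal, w0_dom, phi_dom|].
    rewrite gnorm_scal by apply phi_dom. unfold K2. lra. }
  assert (Hgv2 : gn (fiber_incr t) < delta).
  { apply Rle_lt_trans with ((K2 + 1) * Rabs Dl); [pose proof (Rabs_pos Dl); nra|].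
    apply (Rmult_lt_reg_r (/ (K2 + 1))); [apply Rinv_0_lt_compat; lra|].
    replace ((K2 + 1) * Rabs Dl * / (K2 + 1)) with (Rabs Dl) by (field; lra). exact HDl2. }
  specialize (Hrem _ Dv Hgv2). fold (rem (fiber_incr t)) in Hrem.
  specialize (Hinc t). rewrite Htt in Hinc.
  eapply Rle_trans; [apply Hinc|].
  assert (HCK : C * (eta * K2) <= eps).
  { assert (Hfe : eta * ((C + 1) * (K2 + 1)) = eps) by (unfold eta; field; lra).
    assert (0 <= eta * C) by (apply Rmult_le_pos; lra).
    assert (0 <= eta * K2) by (apply Rmult_le_pos; lra). nra. }
  pose proof (Rabs_pos Dl). pose proof (hnorm_ge0 (rem (fiber_incr t))).
  assert (hnorm (rem (fiber_incr t)) <= eta * (K2 * Rabs Dl)).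
  { eapply Rle_trans; [apply Hrem|]. apply Rmult_le_compat_l; lra. }
  nra.
Qed.

End Tangent.

Lemma fiber_critical_iff :
  ~ invertible_op D L (DF (fiber_u D L N phi z0 t0)) <->
  derivable_pt_lim (fun t => height L N phi (fiber_u D L N phi z0 t)) t0 0.
Proof.
  destruct (fiber_tangent_exists t0 w0 w0_dom w0_perp) as [v0 [Dv0 [Hv0 Tv0]]].
  change (fiber_u D L N phi z0 t0) with u0.
  pose proof (DF_invertible_iff t0 w0 w0_dom w0_perp v0 Dv0 Hv0 Tv0) as Hiff. fold u0 in Hiff.
  rewrite Hiff.
  pose proof (height_fiber_derivative v0 Dv0 Hv0 Tv0) as Hd. split.
  - intros <-. exact Hd.
  - intro H0. exact (uniqueness_limite _ _ _ _ Hd H0).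
Qed.

End AlongFiber.
End SelfAdjoint.

Theorem mainTheorem5 (Y : RHilbert) (D : Y -> Prop) (L N : Y -> Y)
    (lam_p : R) (phi_p : Y) (n : R) (DF : Y -> Y -> Y) (z0 : Y) (t0 : R) :
  self_adjoint D L ->
  simple_isolated_eigenvalue D L lam_p phi_p ->
  hypH D L N phi_p lam_p n ->
  is_C1 D L (Fmap L N) DF ->
  HY phi_p z0 ->
  (~ invertible_op D L (DF (fiber_u D L N phi_p z0 t0)) <->
     derivable_pt_lim (fun t => height L N phi_p (fiber_u D L N phi_p z0 t)) t0 0) /\
  (~ invertible_op D L (DF (fiber_u D L N phi_p z0 t0)) <->
     derivable_pt_lim (fun t => adapted_height D L N phi_p z0 t) t0 0).
Proof.
  intros HL Hlam HN HF Hz0.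
  pose proof (fiber_critical_iff D L lam_p phi_p HL Hlam N n DF HN HF z0 Hz0 t0) as H.
  split; exact H.
Qed.
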